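(* Let $z:[0,\infty)\to X_{0+}$ be a solution of the modified Becker–Döring equations obtained by the truncation construction described in the context. Then $J_l(z(t))\to0$ as $t\to\infty$ for every $l\ge0$.
   Context: Let $(q_l)_{l\ge1}$ be positive with $q_1=1$, $0<R:=\lim_l q_l/q_{l+1}<\infty$, and $\gamma_l>0$ with $\gamma_l/l\to0$. $X=\{z:\sum_l l|z_l|<\infty\}$, $X_{0+}$ its nonnegative elements, $\rho(z)=\sum_l lz_l$, $N(z)=\sum_lz_l$, $J_l(z)=\gamma_l\big(z_1z_l-N(z)\frac{q_l}{q_{l+1}}z_{l+1}\big)$ ($l\ge1$), $J_0(z)=-\sum_{l\ge1}J_l(z)$, $A(z)=\sum_lz_l\ln(z_l/(q_lN(z)))$ ($0\ln0=0$). Fix initial data $y\in X_{0+}$ with $y_1>0$ and $\rho_0:=\rho(y)>0$. For $m\ge2$ let $z^{(m)}$ be the solution of the truncated system $\dot z_l=J_{l-1}(z)-J_l(z)$ ($2\le l\le m-1$), $\dot z_m=J_{m-1}(z)$, $\dot z_1=-J_1(z)-\sum_{l=1}^{m-1}J_l(z)$, $z_l(0)=y_l$ ($l\le m$), with $z_l\equiv0$ for $l>m$. The solution $z$ is a continuous map $[0,\infty)\to X$ such that, for some subsequence $m_j\to\infty$, $z^{(m_j)}_l\to z_l$ uniformly on compact subsets of $[0,\infty)$ for every $l$. Such $z$ exists; it satisfies $z_l(t)\ge0$, $\rho(z(t))=\rho_0$ for all $t$, $\frac{d}{dt}z_l=J_{l-1}(z)-J_l(z)$ for $l\ge2$, $z_1(t_2)-z_1(t_1)=\int_{t_1}^{t_2}J_0(z(t))dt$,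 and $A(z(t_1))-A(z(t_2))\ge \frac{c}{\rho_0^2}\int_{t_1}^{t_2}\sum_{l\ge1}|J_l(z(t))|^2dt$ for $t_1\le t_2$, with $c>0$. *)

(* Sequences are functions nat -> R; index 0 is unused (indices l >= 1 only),
   so sums over l >= 1 are written Series (fun k => f (S k)). *)
From Stdlib Require Import Reals Lra Lia.
From Coquelicot Require Import Coquelicot.
Open Scope R_scope.

Definition inX (z : nat -> R) : Prop :=
  ex_series (fun k => INR (S k) * Rabs (z (S k))).

Definition normX (z : nat -> R) : R :=
  Series (fun k => INR (S k) * Rabs (z (S k))).

Definition rho (z : nat -> R) : R := Series (fun k => INR (S k) * z (S k)).

Definition Nz (z : nat -> R) : R := Series (fun k => z (S k)).

Definition Jp (q gamma : nat -> R) (l : nat) (z : nat -> R) : R :=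
  gamma l * (z 1%nat * z l - Nz z * (q l / q (S l)) * z (S l)).

Definition J (q gamma : nat -> R) (l : nat) (z : nat -> R) : R :=
  match l with
  | O => - Series (fun k => Jp q gamma (S k) z)
  | _ => Jp q gamma l z
  end.

Definition trunc_sol (q gamma y : nat -> R) (m : nat) (zm : R -> nat -> R) : Prop :=
  (forall t l, 0 <= t -> (m < l)%nat -> zm t l = 0) /\
  (forall l, (1 <= l <= m)%nat -> zm 0 l = y l) /\
  (forall l, (1 <= l <= m)%nat ->
     filterlim (fun s => zm s l) (at_right 0) (locally (y l))) /\
  (forall t, 0 < t ->
     is_derive (fun s => zm s 1%nat) t
       (- Jp q gamma 1 (zm t) - sum_f_R0 (fun k => Jp q gamma (S k) (zm t)) (m - 2))) /\
  (forall t l, 0 < t -> (2 <= l <= m - 1)%nat ->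
     is_derive (fun s => zm s l) t (Jp q gamma (l - 1) (zm t) - Jp q gamma l (zm t))) /\
  (forall t, 0 < t ->
     is_derive (fun s => zm s m) t (Jp q gamma (m - 1) (zm t))).

Definition cont_into_X (z : R -> nat -> R) : Prop :=
  (forall t, 0 <= t -> inX (z t)) /\
  (forall t, 0 <= t ->
     filterlim (fun s => normX (fun l => z s l - z t l))
       (within (fun s => 0 <= s) (locally t)) (locally 0)).

From Stdlib Require Import Reals Lra Lia Classical.
From Coquelicot Require Import Coquelicot.
Open Scope R_scope.

(* Every truncation stays nonnegative (a Gronwall estimate for its squared negative parts: a
   nonpositive coordinate is only pushed down by terms proportional to the negative mass),
   conserves the mass [sum_l l z_l], and is positive for [t > 0].  Along a truncation the
   relative entropy [A] is bounded independently of [m] and [t] and decreases at rate at least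
   [J_l ^ 2 / (gamma_l * Kdiss)], while each [J_l] is Lipschitz in time uniformly in [m].  If
   [|J_l (z t)| >= eps] at arbitrarily late times, pointwise convergence transfers
   [|J_l| >= eps / 4] to late truncations on intervals of fixed length after each such time,
   so the entropy of a single truncation would drop by more than its oscillation.  Finally
   [J_0 = - sum_l J_l]: finitely many terms tend to 0, and the tail is uniformly small because
   [gamma_l / l -> 0] while the mass stays bounded. *)

Fixpoint psum (f : nat -> R) (n : nat) : R :=
  match n with O => 0 | S n' => psum f n' + f (S n') end.

Lemma psum_ext f g n : (forall k, (1 <= k <= n)%nat -> f k = g k) -> psum f n = psum g n.
Proof.
  induction n as [|n IH]; intros H; simpl; [lra|].
  rewrite IH by (intros; apply H; lia). rewrite (H (S n)) by lia. lra.
Qed.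

Lemma psum_plus f g n : psum (fun k => f k + g k) n = psum f n + psum g n.
Proof. induction n; simpl; lra. Qed.

Lemma psum_minus f g n : psum (fun k => f k - g k) n = psum f n - psum g n.
Proof. induction n; simpl; lra. Qed.

Lemma psum_opp f n : psum (fun k => - f k) n = - psum f n.
Proof. induction n; simpl; lra. Qed.

Lemma psum_scal c f n : psum (fun k => c * f k) n = c * psum f n.
Proof. induction n; simpl; lra. Qed.

Lemma psum_const c n : psum (fun _ => c) n = INR n * c.
Proof. induction n as [|n IH]; simpl psum; [simpl; ring|]. rewrite IH, S_INR; ring. Qed.

Lemma psum_le f g n : (forall k, (1 <= k <= n)%nat -> f k <= g k) -> psum f n <= psum g n.
Proof.
  induction n as [|n IH]; intros H; simpl; [lra|].
  assert (psum f n <= psum g n) by (apply IH; intros; apply H; lia).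
  assert (f (S n) <= g (S n)) by (apply H; lia). lra.
Qed.

Lemma psum_nonneg f n : (forall k, (1 <= k <= n)%nat -> 0 <= f k) -> 0 <= psum f n.
Proof. intros H. rewrite <- (Rmult_0_r (INR n)), <- psum_const. apply psum_le, H. Qed.

Lemma psum_abs f n : Rabs (psum f n) <= psum (fun k => Rabs (f k)) n.
Proof.
  induction n; simpl; [rewrite Rabs_R0; lra|].
  eapply Rle_trans; [apply Rabs_triang|lra].
Qed.

Lemma psum_split f L d : psum f (L + d) = psum f L + psum (fun k => f (L + k)%nat) d.
Proof.
  induction d as [|d IH]; [rewrite Nat.add_0_r; simpl; ring|].
  rewrite Nat.add_succ_r; simpl. rewrite IH, Nat.add_succ_r. ring.
Qed.

Lemma psum_le_mono f n p : (forall k, (1 <= k)%nat -> 0 <= f k) -> (n <= p)%nat ->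
  psum f n <= psum f p.
Proof.
  intros Hf Hnp. replace p with (n + (p - n))%nat by lia. rewrite psum_split.
  assert (0 <= psum (fun k => f (n + k)%nat) (p - n)) by (apply psum_nonneg; intros; apply Hf; lia).
  lra.
Qed.

Lemma psum_term_le f n k : (forall j, (1 <= j <= n)%nat -> 0 <= f j) -> (1 <= k <= n)%nat ->
  f k <= psum f n.
Proof.
  induction n as [|n IH]; intros Hf Hk; [lia|simpl].
  assert (0 <= f (S n)) by (apply Hf; lia).
  destruct (Nat.eq_dec k (S n)) as [->|Hne].
  - assert (0 <= psum f n) by (apply psum_nonneg; intros; apply Hf; lia). lra.
  - assert (f k <= psum f n) by (apply IH; [intros; apply Hf|]; lia). lra.
Qed.

Lemma psum_support f m n : (forall k, (m < k)%nat -> f k = 0) -> (m <= n)%nat -> psum f n = psum f m.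
Proof.
  intros Hf Hmn. replace n with (m + (n - m))%nat by lia. rewrite psum_split.
  rewrite (psum_ext (fun k => f (m + k)%nat) (fun _ => 0)) by (intros; apply Hf; lia).
  rewrite psum_const. ring.
Qed.

Lemma psum_shift f n : psum f (S n) = f 1%nat + psum (fun k => f (S k)) n.
Proof. change (S n) with (1 + n)%nat. rewrite psum_split. simpl. ring. Qed.

Lemma sum_f_R0_psum f n : sum_f_R0 (fun k => f (S k)) n = psum f (S n).
Proof. induction n as [|n IH]; simpl in *; [lra|]. rewrite IH. simpl. lra. Qed.

Lemma psum_sq_le f n : (psum f n) ^ 2 <= INR n * psum (fun k => f k ^ 2) n.
Proof.
  induction n as [|n IH]; [simpl; lra|].
  destruct n as [|n]; [simpl; nra|].
  change (psum f (S (S n))) with (psum f (S n) + f (S (S n))).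
  change (psum (fun k => f k ^ 2) (S (S n)))
    with (psum (fun k => f k ^ 2) (S n) + f (S (S n)) ^ 2).
  rewrite (S_INR (S n)). set (a := psum f (S n)) in *.
  set (Q := psum (fun k => f k ^ 2) (S n)) in *. set (x := f (S (S n))).
  set (p := INR (S n)) in *. assert (Hp : 0 < p) by (apply lt_0_INR; lia).
  assert (Hstep : 2 * a * x <= Q + p * x ^ 2).
  { assert (0 <= (a - p * x) ^ 2) by apply pow2_ge_0.
    assert (0 <= p * (Q + p * x ^ 2 - 2 * a * x)).
    { replace (p * (Q + p * x ^ 2 - 2 * a * x)) with (p * Q - a ^ 2 + (a - p * x) ^ 2) by ring.
      lra. }
    apply Rmult_le_reg_l with p; nra. }
  nra.
Qed.

Lemma psum_derive (F : R -> nat -> R) (dF : nat -> R) t n :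
  (forall k, (1 <= k <= n)%nat -> is_derive (fun s => F s k) t (dF k)) ->
  is_derive (fun s => psum (F s) n) t (psum dF n).
Proof.
  induction n as [|n IH]; intros H; simpl.
  - exact (@is_derive_const R_AbsRing R_NormedModule 0 t).
  - apply (is_derive_plus (fun s => psum (F s) n) (fun s => F s (S n))).
    + apply IH; intros; apply H; lia.
    + apply H; lia.
Qed.

Lemma is_lim_seq_psum (F : nat -> nat -> R) (l : nat -> R) n :
  (forall k, (1 <= k <= n)%nat -> is_lim_seq (fun j => F j k) (l k)) ->
  is_lim_seq (fun j => psum (F j) n) (psum l n).
Proof.
  induction n as [|n IH]; intros H; simpl.
  - apply is_lim_seq_const.
  - apply (is_lim_seq_plus' (fun j => psum (F j) n) (fun j => F j (S n))).
    + apply IH; intros; apply H; lia.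
    + apply H; lia.
Qed.

Lemma is_lim_seq_le_ev (u : nat -> R) (L B : R) :
  is_lim_seq u L -> (exists N, forall n, (N <= n)%nat -> u n <= B) -> L <= B.
Proof.
  intros H HN. exact (is_lim_seq_le_loc u (fun _ => B) L B HN H (is_lim_seq_const B)).
Qed.

Lemma is_lim_seq_ge_ev (u : nat -> R) (L B : R) :
  is_lim_seq u L -> (exists N, forall n, (N <= n)%nat -> B <= u n) -> B <= L.
Proof.
  intros H HN. exact (is_lim_seq_le_loc (fun _ => B) u B L HN (is_lim_seq_const B) H).
Qed.

Lemma is_lim_seq_Series_psum f :
  ex_series (fun k => f (S k)) -> is_lim_seq (fun n => psum f n) (Series (fun k => f (S k))).
Proof.
  intros H. apply Series_correct in H. apply (is_lim_seq_incr_1 (fun n => psum f n)).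
  eapply filterlim_ext; [|apply H]. intros n. simpl.
  rewrite sum_n_Reals, sum_f_R0_psum. reflexivity.
Qed.

Lemma is_series_support f m : (forall k, (m < k)%nat -> f k = 0) ->
  is_series (fun k => f (S k)) (psum f m).
Proof.
  intros H. change (is_lim_seq (sum_n (fun k => f (S k))) (psum f m)).
  apply (is_lim_seq_ext_loc (fun _ => psum f m)); [|apply is_lim_seq_const].
  exists m. intros n Hn. rewrite sum_n_Reals, sum_f_R0_psum. symmetry. apply psum_support; auto.
Qed.

Lemma Series_support f m : (forall k, (m < k)%nat -> f k = 0) -> Series (fun k => f (S k)) = psum f m.
Proof. intros H. apply is_series_unique, is_series_support, H. Qed.

Lemma psum_le_Series f n : ex_series (fun k => f (S k)) -> (forall k, (1 <= k)%nat -> 0 <= f k) ->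
  psum f n <= Series (fun k => f (S k)).
Proof.
  intros He Hf. apply (is_lim_seq_ge_ev _ _ _ (is_lim_seq_Series_psum f He)).
  exists n. intros p Hp. apply psum_le_mono; auto.
Qed.

Lemma psum_tail_le f M L n : (1 <= L)%nat -> (L <= n)%nat -> (forall k, (1 <= k)%nat -> 0 <= f k) ->
  psum (fun k => INR k * f k) n <= M -> 0 <= psum f n - psum f L <= M / INR L.
Proof.
  intros HL Hn Hf HM. assert (HLR : 0 < INR L) by (apply lt_0_INR; lia).
  replace n with (L + (n - L))%nat in * by lia. rewrite psum_split in HM |- *.
  set (tail := psum (fun k => f (L + k)%nat) (n - L)).
  assert (Htail : INR L * tail <= psum (fun k => INR (L + k) * f (L + k)%nat) (n - L)).
  { unfold tail. rewrite <- psum_scal. apply psum_le. intros k Hk.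
    apply Rmult_le_compat_r; [apply Hf; lia|apply le_INR; lia]. }
  assert (0 <= psum (fun k => INR k * f k) L)
    by (apply psum_nonneg; intros; apply Rmult_le_pos; [apply pos_INR|apply Hf; lia]).
  assert (0 <= tail) by (apply psum_nonneg; intros; apply Hf; lia).
  split; [lra|]. apply (Rmult_le_reg_l (INR L)); [lra|].
  replace (INR L * (M / INR L)) with M by (field; lra). lra.
Qed.

Lemma Nz_sub_psum_le v M L : (1 <= L)%nat -> (forall k, (1 <= k)%nat -> 0 <= v k) ->
  (forall n, psum (fun k => INR k * v k) n <= M) -> ex_series (fun k => v (S k)) ->
  0 <= Nz v - psum v L <= M / INR L.
Proof.
  intros HL Hv HM Hs. assert (Hlim := is_lim_seq_Series_psum v Hs). fold (Nz v) in Hlim.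
  assert (Htail : forall n, (L <= n)%nat -> 0 <= psum v n - psum v L <= M / INR L)
    by (intros; apply psum_tail_le; auto).
  split.
  - cut (psum v L <= Nz v); [lra|]. apply (is_lim_seq_ge_ev _ _ _ Hlim).
    exists L. intros n Hn. specialize (Htail n Hn). lra.
  - cut (Nz v <= M / INR L + psum v L); [lra|]. apply (is_lim_seq_le_ev _ _ _ Hlim).
    exists L. intros n Hn. specialize (Htail n Hn). lra.
Qed.

Lemma Series_sub_psum_le f h H L : ex_series (fun k => f (S k)) ->
  (forall k, (L < k)%nat -> Rabs (f k) <= h k) -> (forall k, (1 <= k)%nat -> 0 <= h k) ->
  (forall n, psum h n <= H) -> Rabs (Series (fun k => f (S k)) - psum f L) <= H.
Proof.
  intros Hf Hfh Hh HH. assert (Hlim := is_lim_seq_Series_psum f Hf).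
  assert (Htail : forall n, (L <= n)%nat -> Rabs (psum f n - psum f L) <= H).
  { intros n Hn. replace n with (L + (n - L))%nat by lia. rewrite psum_split.
    replace (psum f L + psum (fun k => f (L + k)%nat) (n - L) - psum f L)
      with (psum (fun k => f (L + k)%nat) (n - L)) by ring.
    eapply Rle_trans; [apply psum_abs|].
    eapply Rle_trans; [apply (psum_le _ (fun k => h (L + k)%nat)); intros; apply Hfh; lia|].
    eapply Rle_trans; [|apply (HH (L + (n - L))%nat)]. rewrite psum_split.
    assert (0 <= psum h L) by (apply psum_nonneg; intros; apply Hh; lia). lra. }
  apply Rabs_le. split.
  - cut (psum f L - H <= Series (fun k => f (S k))); [lra|]. apply (is_lim_seq_ge_ev _ _ _ Hlim).
    exists L. intros n Hn. specialize (Htail n Hn). apply Rabs_le_between in Htail. lra.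
  - cut (Series (fun k => f (S k)) <= psum f L + H); [lra|]. apply (is_lim_seq_le_ev _ _ _ Hlim).
    exists L. intros n Hn. specialize (Htail n Hn). apply Rabs_le_between in Htail. lra.
Qed.

Lemma ln_le_sub_1 x : 0 < x -> ln x <= x - 1.
Proof. intros Hx. pose proof (exp_ineq1_le (ln x)). rewrite exp_ln in H; lra. Qed.

(* Rescaling [x = exp (-(k+1)) u] reduces this to [u ln u >= u - 1]. *)
Lemma xlnx_ge x (k : nat) : 0 < x -> - INR k * x - exp (- (INR k + 1)) <= x * ln x.
Proof.
  intros Hx. set (e := exp (- (INR k + 1))). assert (He : 0 < e) by apply exp_pos.
  set (u := x / e). assert (Hu : 0 < u) by (apply Rdiv_lt_0_compat; auto).
  assert (Hxu : x = e * u) by (unfold u; field; lra).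
  assert (Hl : ln x = ln u - (INR k + 1))
    by (rewrite Hxu, ln_mult by auto; unfold e; rewrite ln_exp; ring).
  assert (Hu1 : 0 <= u * ln u - u + 1).
  { pose proof (ln_le_sub_1 (/ u) (Rinv_0_lt_compat _ Hu)) as H. rewrite ln_Rinv in H by auto.
    assert (Hmul : u * (- ln u) <= u * (/ u - 1)) by (apply Rmult_le_compat_l; lra).
    replace (u * (/ u - 1)) with (1 - u) in Hmul by (field; lra). lra. }
  rewrite Hl, Hxu. assert (0 <= e * (u * ln u - u + 1)) by (apply Rmult_le_pos; lra). nra.
Qed.

Lemma exp_opp_INR_le k : exp (- INR k) <= (/ 2) ^ k.
Proof.
  assert (He1 : / exp 1 <= / 2).
  { apply Rinv_le_contravar; [lra|]. pose proof (exp_ineq1_le 1). lra. }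
  induction k as [|k IH]; [simpl; rewrite Ropp_0, exp_0; lra|].
  rewrite S_INR, Ropp_plus_distr, exp_plus, (exp_Ropp 1), Rmult_comm. simpl.
  apply Rmult_le_compat; auto; left; [apply Rinv_0_lt_compat|]; apply exp_pos.
Qed.

Lemma psum_exp_le_1 n : psum (fun k => exp (- (INR k + 1))) n <= 1.
Proof.
  assert (Hgeom : psum (fun k => (/ 2) ^ k) n = 1 - (/ 2) ^ n).
  { induction n as [|n IH]; simpl; [lra|]. rewrite IH. field. }
  assert (0 <= (/ 2) ^ n) by (apply pow_le; lra).
  apply Rle_trans with (psum (fun k => (/ 2) ^ k) n); [|lra].
  apply psum_le. intros k _. eapply Rle_trans; [|apply exp_opp_INR_le].
  left. apply exp_increasing. lra.
Qed.

Lemma sqr_sub_div_le_mul_ln_aux a b : 0 < b <= a -> (a - b) ^ 2 / (a + b) <= (a - b) * (ln a - ln b).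
Proof.
  intros [Hb Hba]. assert (Ha : 0 < a) by lra.
  assert (Hln : (a - b) / a <= ln a - ln b).
  { pose proof (ln_le_sub_1 (b / a) (Rdiv_lt_0_compat _ _ Hb Ha)) as H.
    rewrite ln_div in H by auto. replace ((a - b) / a) with (- (b / a - 1)) by (field; lra). lra. }
  apply Rle_trans with ((a - b) * ((a - b) / a)).
  - unfold Rdiv. rewrite <- Rmult_assoc. replace ((a - b) ^ 2) with ((a - b) * (a - b)) by ring.
    apply Rmult_le_compat_l; [nra|]. apply Rinv_le_contravar; lra.
  - apply Rmult_le_compat_l; lra.
Qed.

Lemma sqr_sub_div_le_mul_ln a b : 0 < a -> 0 < b -> (a - b) ^ 2 / (a + b) <= (a - b) * (ln a - ln b).
Proof.
  intros Ha Hb. destruct (Rle_dec b a); [apply sqr_sub_div_le_mul_ln_aux; lra|].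
  replace ((a - b) ^ 2 / (a + b)) with ((b - a) ^ 2 / (b + a)) by (field; lra).
  replace ((a - b) * (ln a - ln b)) with ((b - a) * (ln b - ln a)) by ring.
  apply sqr_sub_div_le_mul_ln_aux; lra.
Qed.

Lemma scale_ge g X A C : 0 < g <= C -> 0 <= A -> - A <= X -> - (C * A) <= g * X.
Proof. intros. nra. Qed.

Definition negpart x := - Rmin x 0.

Lemma negpart_nonneg x : 0 <= negpart x.
Proof. unfold negpart, Rmin. destruct (Rle_dec x 0); lra. Qed.

Lemma negpart_ge_opp x : - x <= negpart x.
Proof. unfold negpart, Rmin. destruct (Rle_dec x 0); lra. Qed.

Lemma negpart_of_nonpos x : x <= 0 -> negpart x = - x.
Proof. unfold negpart, Rmin. destruct (Rle_dec x 0); lra. Qed.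

Lemma negpart_of_nonneg x : 0 <= x -> negpart x = 0.
Proof. unfold negpart, Rmin. destruct (Rle_dec x 0); lra. Qed.

Lemma mul_ge_negpart x y B : Rabs x <= B -> Rabs y <= B -> - B * (negpart x + negpart y) <= x * y.
Proof.
  intros Hx Hy. apply Rabs_le_between in Hx. apply Rabs_le_between in Hy.
  unfold negpart, Rmin. destruct (Rle_dec x 0); destruct (Rle_dec y 0); nra.
Qed.

Lemma opp_mul_ge_negpart x y B : y <= 0 -> Rabs x <= B -> - B * negpart y <= - (x * y).
Proof.
  intros Hy Hx. rewrite negpart_of_nonpos by auto. apply Rabs_le_between in Hx. nra.
Qed.

Lemma is_derive_Rmin_0_sq x : is_derive (fun x => Rmin x 0 ^ 2) x (2 * Rmin x 0).
Proof.
  destruct (Rtotal_order x 0) as [Hx|[->|Hx]].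
  - apply (is_derive_ext_loc (fun x => x ^ 2)).
    + exists (mkposreal (- x) ltac:(lra)). intros v Hv. apply Rabs_lt_between in Hv.
      rewrite Rmin_left by (unfold minus, plus, opp in Hv; simpl in Hv; lra). reflexivity.
    + rewrite Rmin_left by lra. auto_derive; auto; ring.
  - apply is_derive_Reals. intros eps He. exists (mkposreal eps He). intros h Hh Hh'. simpl in Hh'.
    rewrite Rplus_0_l, (Rmin_left 0 0) by lra. unfold Rmin. destruct (Rle_dec h 0).
    + replace ((h ^ 2 - 0 ^ 2) / h - 2 * 0) with h by (field; auto). auto.
    + replace ((0 ^ 2 - 0 ^ 2) / h - 2 * 0) with 0 by (field; auto). rewrite Rabs_R0; auto.
  - apply (is_derive_ext_loc (fun _ => 0)).
    + exists (mkposreal x ltac:(lra)). intros v Hv. apply Rabs_lt_between in Hv.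
      rewrite Rmin_right by (unfold minus, plus, opp in Hv; simpl in Hv; lra). simpl; ring.
    + rewrite Rmin_right by lra. replace (2 * 0) with 0 by ring.
      exact (@is_derive_const R_AbsRing R_NormedModule 0 x).
Qed.

Lemma is_derive_continuity_pt f x l : is_derive f x l -> continuity_pt f x.
Proof.
  intros H. apply continuity_pt_filterlim.
  apply (ex_derive_continuous (K := R_AbsRing) (V := R_NormedModule)). exists l; auto.
Qed.

Lemma mvt_derive (f df : R -> R) a b : a <= b -> (forall x, a <= x <= b -> is_derive f x (df x)) ->
  exists c, a <= c <= b /\ f b - f a = df c * (b - a).
Proof.
  intros Hab H. destruct (MVT_gen f a b df) as [c [Hc Hf]].
  - intros x Hx. rewrite Rmin_left, Rmax_right in Hx by lra. apply H; lra.
  - intros x Hx. rewrite Rmin_left, Rmax_right in Hx by lra. eapply is_derive_continuity_pt, H; lra.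
  - rewrite Rmin_left, Rmax_right in Hc by lra. exists c; split; auto.
Qed.

Lemma derive_le_incr (f df : R -> R) a b c : a <= b -> (forall x, a <= x <= b -> is_derive f x (df x)) ->
  (forall x, a <= x <= b -> df x <= c) -> f b - f a <= c * (b - a).
Proof.
  intros Hab H Hd. destruct (mvt_derive f df a b Hab H) as [x [Hx ->]].
  apply Rmult_le_compat_r; [lra|]. apply Hd; lra.
Qed.

Lemma is_derive_exp_mul (f : R -> R) C x d :
  is_derive f x d -> is_derive (fun s => exp (C * s) * f s) x (exp (C * x) * (d + C * f x)).
Proof.
  intros Hf.
  assert (He : is_derive (fun s => exp (C * s)) x (C * exp (C * x))) by (auto_derive; auto; ring).
  replace (exp (C * x) * (d + C * f x)) with (C * exp (C * x) * f x + exp (C * x) * d) by ring.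
  exact (Derive.is_derive_mult _ _ _ _ _ He Hf).
Qed.

Lemma exp_weighted_le (f df : R -> R) C a b : a <= b ->
  (forall x, a <= x <= b -> is_derive f x (df x)) -> (forall x, a <= x <= b -> - C * f x <= df x) ->
  exp (C * a) * f a <= exp (C * b) * f b.
Proof.
  intros Hab Hf Hd.
  assert (H := derive_le_incr (fun s => - (exp (C * s) * f s))
                 (fun s => - (exp (C * s) * (df s + C * f s))) a b 0 Hab).
  cut (- (exp (C * b) * f b) - - (exp (C * a) * f a) <= 0 * (b - a)); [lra|].
  apply H.
  - intros x Hx. apply (is_derive_opp (fun s => exp (C * s) * f s)), is_derive_exp_mul, Hf, Hx.
  - intros x Hx. pose proof (Hd x Hx). pose proof (exp_pos (C * x)). nra.
Qed.

Lemma exp_weighted_lt (f df : R -> R) C a b : a < b ->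
  (forall x, a <= x <= b -> is_derive f x (df x)) -> (forall x, a <= x <= b -> - C * f x < df x) ->
  exp (C * a) * f a < exp (C * b) * f b.
Proof.
  intros Hab Hf Hd.
  destruct (mvt_derive (fun s => exp (C * s) * f s) (fun s => exp (C * s) * (df s + C * f s)) a b)
    as [x [Hx E]]; [lra|intros; apply is_derive_exp_mul, Hf; auto|].
  assert (0 < exp (C * x) * (df x + C * f x) * (b - a)).
  { pose proof (Hd x Hx). pose proof (exp_pos (C * x)).
    apply Rmult_lt_0_compat; [apply Rmult_lt_0_compat|]; lra. }
  lra.
Qed.

Lemma eq_0_of_abs_le_eps x : (forall eps, 0 < eps -> Rabs x <= eps) -> x = 0.
Proof.
  intros H. destruct (Req_dec x 0) as [|Hx]; auto.
  assert (Hx' := Rabs_pos_lt x Hx). specialize (H (Rabs x / 2) ltac:(lra)). lra.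
Qed.

Lemma at_right_0_ex (P : R -> Prop) : at_right 0 P -> exists d, 0 < d /\ forall s, 0 < s < d -> P s.
Proof.
  intros [eps H]. exists eps. split; [apply cond_pos|]. intros s Hs. apply H; [|lra].
  unfold ball; simpl; unfold AbsRing_ball, abs, minus, plus, opp; simpl. rewrite Rabs_right; lra.
Qed.

Lemma at_right_0_abs_lt f L eps : filterlim f (at_right 0) (locally L) -> 0 < eps ->
  at_right 0 (fun s => Rabs (f s - L) < eps).
Proof.
  intros H He. apply (H (fun v => Rabs (v - L) < eps)).
  exists (mkposreal eps He). intros v Hv. apply Hv.
Qed.

Lemma at_right_0_forall_range (P : nat -> R -> Prop) n :
  (forall k, (1 <= k <= n)%nat -> at_right 0 (P k)) ->
  at_right 0 (fun s => forall k, (1 <= k <= n)%nat -> P k s).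
Proof.
  induction n as [|n IH]; intros H; [apply filter_forall; intros s k Hk; lia|].
  eapply filter_imp; [|apply filter_and; [apply IH; intros; apply H; lia|apply (H (S n)); lia]].
  intros s [H1 H2] k Hk. destruct (Nat.eq_dec k (S n)) as [->|]; [auto|apply H1; lia].
Qed.

Lemma bounded_on_0T f L T : 0 < T -> filterlim f (at_right 0) (locally L) ->
  (forall s, 0 < s -> continuity_pt f s) -> exists B, forall s, 0 < s <= T -> Rabs (f s) <= B.
Proof.
  intros HT Hl Hc. destruct (at_right_0_ex _ (at_right_0_abs_lt f L 1 Hl Rlt_0_1)) as [d [Hd Hd']].
  set (a := Rmin (d / 2) T). assert (0 < a) by (apply Rmin_pos; lra).
  assert (a <= T) by apply Rmin_r. assert (a <= d / 2) by apply Rmin_l.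
  destruct (continuity_ab_maj (fun s => Rabs (f s)) a T) as [M [HM _]]; auto.
  { intros c Hc'. apply (continuity_pt_comp f Rabs); [apply Hc; lra|apply Rcontinuity_abs]. }
  exists (Rmax (Rabs L + 1) (Rabs (f M))). intros s Hs. destruct (Rle_dec a s).
  - eapply Rle_trans; [apply HM; lra|apply Rmax_r].
  - specialize (Hd' s ltac:(lra)). eapply Rle_trans; [|apply Rmax_l].
    pose proof (Rabs_triang_inv (f s) L). lra.
Qed.

Lemma finite_family_bound (P : nat -> R -> Prop) n :
  (forall k, (1 <= k <= n)%nat -> exists B, P k B) -> (forall k B B', P k B -> B <= B' -> P k B') ->
  exists B, 0 <= B /\ forall k, (1 <= k <= n)%nat -> P k B.
Proof.
  intros H Hm. induction n as [|n IH]; [exists 0; split; [lra|intros; lia]|].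
  destruct IH as [B [HB0 HB]]; [intros; apply H; lia|].
  destruct (H (S n)) as [B' HB']; [lia|].
  exists (Rmax B B'). split; [eapply Rle_trans; [apply HB0|apply Rmax_l]|].
  intros k Hk. destruct (Nat.eq_dec k (S n)) as [->|].
  - eapply Hm; [apply HB'|apply Rmax_r].
  - eapply Hm; [apply HB; lia|apply Rmax_l].
Qed.

(** * Estimates for the truncated systems *)

Definition trunc_rhs (J : nat -> R) (m k : nat) : R :=
  if Nat.eqb k 1 then - J 1%nat - psum J (m - 1)
  else if Nat.eqb k m then J (m - 1)%nat else J (k - 1)%nat - J k.

Lemma psum_telescope (J u : nat -> R) n :
  psum (fun k => (J (k - 1)%nat - J k) * u k) (S n) =
  J 0%nat * u 1%nat - J (S n) * u (S n) + psum (fun l => J l * (u (S l) - u l)) n.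
Proof.
  induction n as [|n IH]; [simpl; ring|].
  change (psum (fun k => (J (k - 1)%nat - J k) * u k) (S (S n))) with
    (psum (fun k => (J (k - 1)%nat - J k) * u k) (S n) + (J (S n - 0)%nat - J (S (S n))) * u (S (S n))).
  rewrite IH, Nat.sub_0_r. simpl. ring.
Qed.

Lemma trunc_rhs_weak_form (J u : nat -> R) m : (2 <= m)%nat ->
  psum (fun k => trunc_rhs J m k * u k) m = psum (fun l => J l * (u (S l) - u l - u 1%nat)) (m - 1).
Proof.
  intros Hm.
  (* Extending [J] by [J' 0 = - sum J] and [J' m = 0] makes every coordinate a plain difference. *)
  set (J' := fun k => if Nat.eqb k 0 then - psum J (m - 1) else if Nat.ltb k m then J k else 0).
  rewrite (psum_ext _ (fun k => (J' (k - 1)%nat - J' k) * u k)).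
  2:{ intros k Hk. unfold trunc_rhs, J'.
      destruct (Nat.eqb_spec k 1) as [->|H1]; [simpl; destruct (Nat.ltb_spec 1 m); [ring|lia]|].
      destruct (Nat.eqb_spec (k - 1) 0); [lia|]. destruct (Nat.ltb_spec (k - 1) m); [|lia].
      destruct (Nat.eqb_spec k 0); [lia|]. destruct (Nat.eqb_spec k m) as [->|Hkm].
      - rewrite Nat.ltb_irrefl. ring.
      - destruct (Nat.ltb_spec k m); [ring|lia]. }
  replace m with (S (m - 1)) at 1 by lia. rewrite psum_telescope.
  rewrite (psum_ext (fun l => J' l * (u (S l) - u l)) (fun l => J l * (u (S l) - u l))).
  2:{ intros k Hk. unfold J'. destruct (Nat.eqb_spec k 0); [lia|].
      destruct (Nat.ltb_spec k m); [reflexivity|lia]. }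
  unfold J'. simpl. destruct (Nat.ltb_spec (S (m - 1)) m); [lia|].
  rewrite (psum_ext (fun l => J l * (u (S l) - u l - u 1%nat))
             (fun l => J l * (u (S l) - u l) - u 1%nat * J l)) by (intros; ring).
  rewrite psum_minus, psum_scal. ring.
Qed.

Definition entropy (q : nat -> R) (m : nat) (w : nat -> R) : R :=
  psum (fun k => w k * (ln (w k) - ln (q k) - ln (psum w m))) m.

Section Estimates.

Variables (q gamma y : nat -> R) (G Rm be rh : R).
Hypothesis hq_pos : forall l, (1 <= l)%nat -> 0 < q l.
Hypothesis hq1 : q 1%nat = 1.
Hypothesis hgamma_pos : forall l, (1 <= l)%nat -> 0 < gamma l.
Hypothesis hgamma_le : forall l, (1 <= l)%nat -> gamma l <= G * INR l.
Hypothesis hratio_le : forall l, (1 <= l)%nat -> q l / q (S l) <= Rm.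
Hypothesis hln_q : forall l, (1 <= l)%nat -> Rabs (ln (q l)) <= be * INR l.
Hypothesis hy_nonneg : forall l, (1 <= l)%nat -> 0 <= y l.
Hypothesis hy1 : 0 < y 1%nat.
Hypothesis hy_mass : forall n, psum (fun k => INR k * y k) n <= rh.

Lemma ratio_pos l : (1 <= l)%nat -> 0 < q l / q (S l).
Proof. intros. apply Rdiv_lt_0_compat; apply hq_pos; lia. Qed.

Lemma G_nonneg : 0 <= G.
Proof. pose proof (hgamma_le 1 (le_n _)). pose proof (hgamma_pos 1 (le_n _)). simpl in *. lra. Qed.

Lemma Rm_pos : 0 < Rm.
Proof. pose proof (hratio_le 1 (le_n _)). pose proof (ratio_pos 1 (le_n _)). lra. Qed.

Lemma be_nonneg : 0 <= be.
Proof. pose proof (hln_q 1 (le_n _)). pose proof (Rabs_pos (ln (q 1%nat))). simpl in *. lra. Qed.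

Lemma rh_pos : 0 < rh.
Proof. pose proof (hy_mass 1). simpl in *. lra. Qed.

Definition Kdiss := rh * rh * (1 + Rm).

Lemma Kdiss_pos : 0 < Kdiss.
Proof. pose proof rh_pos. pose proof Rm_pos. unfold Kdiss. apply Rmult_lt_0_compat; nra. Qed.

Definition flux_lip (l : nat) := 4 * gamma l * (G * Kdiss) * rh * (1 + Rm).

Definition entropy_osc := rh + 1 + rh * rh + 2 * be * rh.

Lemma Jp_abs_le (v : nat -> R) l : (1 <= l)%nat -> 0 <= v 1%nat <= rh -> 0 <= v l -> 0 <= v (S l) ->
  0 <= Nz v <= rh -> Rabs (Jp q gamma l v) <= gamma l * (rh * v l + rh * Rm * v (S l)).
Proof.
  intros Hl Hv1 Hvl Hvl' HN. unfold Jp. pose proof (hgamma_pos l Hl).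
  assert (Hr : 0 < q l / q (S l) <= Rm) by (split; [apply ratio_pos|apply hratio_le]; auto).
  assert (Ha : 0 <= v 1%nat * v l <= rh * v l)
    by (split; [apply Rmult_le_pos|apply Rmult_le_compat_r]; lra).
  assert (Hb : 0 <= Nz v * (q l / q (S l)) * v (S l) <= rh * Rm * v (S l)).
  { split; [apply Rmult_le_pos; [apply Rmult_le_pos|]; lra|].
    apply Rmult_le_compat_r; [lra|]. apply Rmult_le_compat; lra. }
  rewrite Rabs_mult, Rabs_right by lra. apply Rmult_le_compat_l; [lra|]. apply Rabs_le. lra.
Qed.

Section Truncation.

Variables (m : nat) (w : R -> nat -> R).
Hypothesis Hm : (2 <= m)%nat.
Hypothesis Hw : trunc_sol q gamma y m w.

Definition flux t l := Jp q gamma l (w t).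
Definition rate t k := trunc_rhs (flux t) m k.
Definition total t := psum (w t) m.

Lemma w_support t k : 0 <= t -> (m < k)%nat -> w t k = 0.
Proof. apply (proj1 Hw). Qed.

Lemma w_initial k : (1 <= k <= m)%nat -> w 0 k = y k.
Proof. apply (proj1 (proj2 Hw)). Qed.

Lemma flux_eq t l : 0 <= t ->
  flux t l = gamma l * (w t 1%nat * w t l - total t * (q l / q (S l)) * w t (S l)).
Proof.
  intros Ht. unfold flux, Jp, Nz, total.
  rewrite (Series_support (w t) m) by (intros; apply w_support; auto). reflexivity.
Qed.

Lemma is_derive_w t k : 0 < t -> (1 <= k <= m)%nat -> is_derive (fun s => w s k) t (rate t k).
Proof.
  intros Ht Hk. destruct Hw as (_ & _ & _ & H1 & Hmid & Hlast). unfold rate, trunc_rhs.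
  destruct (Nat.eqb_spec k 1) as [->|]; [|destruct (Nat.eqb_spec k m) as [->|]].
  - specialize (H1 t Ht). rewrite (sum_f_R0_psum (flux t)) in H1.
    replace (S (m - 2)) with (m - 1)%nat in H1 by lia. exact H1.
  - apply Hlast; auto.
  - apply Hmid; auto; lia.
Qed.

Lemma w_bounded_on_0T T : 0 < T ->
  exists B, 0 <= B /\ forall k, (1 <= k <= m)%nat -> forall s, 0 < s <= T -> Rabs (w s k) <= B.
Proof.
  intros HT. apply (finite_family_bound (fun k B => forall s, 0 < s <= T -> Rabs (w s k) <= B)).
  - intros k Hk. apply (bounded_on_0T (fun s => w s k) (y k)); auto.
    + apply (proj1 (proj2 (proj2 Hw))); auto.
    + intros s Hs. eapply is_derive_continuity_pt, is_derive_w; auto.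
  - intros k B B' H HB s Hs. specialize (H s Hs). lra.
Qed.

Lemma w_near_initial e t : 0 < e -> 0 < t ->
  exists s, 0 < s < t /\ forall k, (1 <= k <= m)%nat -> Rabs (w s k - y k) < e.
Proof.
  intros He Ht.
  assert (Hnear : at_right 0 (fun s => forall k, (1 <= k <= m)%nat -> Rabs (w s k - y k) < e)).
  { apply at_right_0_forall_range. intros k Hk.
    apply at_right_0_abs_lt; auto. apply (proj1 (proj2 (proj2 Hw))); auto. }
  destruct (at_right_0_ex _ Hnear) as [d [Hd Hd']]. exists (Rmin (d / 2) (t / 2)).
  assert (0 < Rmin (d / 2) (t / 2)) by (apply Rmin_pos; lra).
  pose proof (Rmin_l (d / 2) (t / 2)). pose proof (Rmin_r (d / 2) (t / 2)).
  split; [lra|]. apply Hd'. lra.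
Qed.

Definition neg_total s := psum (fun j => negpart (w s j)) m.

Lemma neg_total_nonneg s : 0 <= neg_total s.
Proof. apply psum_nonneg. intros; apply negpart_nonneg. Qed.

Lemma negpart_w_le s k : 0 <= s -> (1 <= k)%nat -> negpart (w s k) <= neg_total s.
Proof.
  intros Hs Hk. destruct (Compare_dec.le_lt_dec k m).
  - apply (psum_term_le (fun j => negpart (w s j))); [intros; apply negpart_nonneg|lia].
  - rewrite w_support, negpart_of_nonneg by (auto || lra). apply neg_total_nonneg.
Qed.

Lemma negpart_total_le s : negpart (total s) <= neg_total s.
Proof.
  destruct (Rle_dec (total s) 0).
  - rewrite negpart_of_nonpos by auto. unfold total, neg_total. rewrite <- psum_opp.
    apply psum_le. intros. apply negpart_ge_opp.
  - rewrite negpart_of_nonneg by lra. apply neg_total_nonneg.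
Qed.

Section Quasi_positivity.

Variables (s B : R).
Hypothesis Hs : 0 <= s.
Hypothesis HB : forall j, (1 <= j)%nat -> Rabs (w s j) <= B.
Hypothesis HBtot : Rabs (total s) <= B.

Lemma B_nonneg : 0 <= B.
Proof. specialize (HB 1%nat (le_n _)). pose proof (Rabs_pos (w s 1%nat)). lra. Qed.

Definition neg_flux_const := 2 * (G * INR m) * (1 + Rm) * B.

Lemma gamma_le_Gm l : (1 <= l < m)%nat -> 0 < gamma l <= G * INR m.
Proof.
  intros Hl. split; [apply hgamma_pos; lia|]. eapply Rle_trans; [apply hgamma_le; lia|].
  apply Rmult_le_compat_l; [apply G_nonneg|apply le_INR; lia].
Qed.

Lemma flux_ge_of_next_nonpos l : (1 <= l < m)%nat -> w s (S l) <= 0 ->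
  - (neg_flux_const * neg_total s) <= flux s l.
Proof.
  intros Hl Hw1. rewrite flux_eq by auto.
  pose proof (negpart_w_le s 1 Hs (le_n _)). pose proof (negpart_w_le s l Hs ltac:(lia)).
  pose proof (negpart_w_le s (S l) Hs ltac:(lia)). pose proof (neg_total_nonneg s) as HS.
  set (Sg := neg_total s) in *. set (r := q l / q (S l)). pose proof B_nonneg as HB0.
  assert (Hr : 0 < r <= Rm) by (split; [apply ratio_pos|apply hratio_le]; lia).
  assert (Hgain : - (2 * B * Sg) <= w s 1%nat * w s l).
  { pose proof (mul_ge_negpart (w s 1%nat) (w s l) B (HB _ (le_n _)) (HB l ltac:(lia))). nra. }
  assert (Hloss : - (Rm * (B * Sg)) <= r * - (total s * w s (S l))).
  { apply scale_ge; [lra|nra|]. pose proof (opp_mul_ge_negpart (total s) (w s (S l)) B Hw1 HBtot). nra. }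
  replace (gamma l * (w s 1%nat * w s l - total s * r * w s (S l)))
    with (gamma l * (w s 1%nat * w s l + r * - (total s * w s (S l)))) by ring.
  unfold neg_flux_const. fold Sg. pose proof Rm_pos.
  assert (0 <= B * Sg) by (apply Rmult_le_pos; lra).
  assert (0 <= Rm * (B * Sg)) by (apply Rmult_le_pos; lra).
  replace (2 * (G * INR m) * (1 + Rm) * B * Sg) with (G * INR m * (2 * (1 + Rm) * B * Sg)) by ring.
  apply scale_ge; [apply gamma_le_Gm; auto|nra|nra].
Qed.

Lemma opp_flux_ge_of_nonpos l : (1 <= l < m)%nat -> w s 1%nat <= 0 \/ w s l <= 0 ->
  - (neg_flux_const * neg_total s) <= - flux s l.
Proof.
  intros Hl Hw0. rewrite flux_eq by auto.
  pose proof (negpart_w_le s 1 Hs (le_n _)). pose proof (negpart_w_le s l Hs ltac:(lia)).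
  pose proof (negpart_w_le s (S l) Hs ltac:(lia)). pose proof (negpart_total_le s).
  pose proof (neg_total_nonneg s) as HS.
  set (Sg := neg_total s) in *. set (r := q l / q (S l)). pose proof B_nonneg as HB0.
  assert (Hr : 0 < r <= Rm) by (split; [apply ratio_pos|apply hratio_le]; lia).
  assert (Hloss : - (B * Sg) <= - (w s 1%nat * w s l)).
  { destruct Hw0 as [Hnp|Hnp].
    - rewrite Rmult_comm.
      pose proof (opp_mul_ge_negpart (w s l) (w s 1%nat) B Hnp (HB l ltac:(lia))). nra.
    - pose proof (opp_mul_ge_negpart (w s 1%nat) (w s l) B Hnp (HB 1%nat (le_n _))). nra. }
  assert (Hgain : - (Rm * (2 * B * Sg)) <= r * (total s * w s (S l))).
  { apply scale_ge; [lra|nra|].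
    pose proof (mul_ge_negpart (total s) (w s (S l)) B HBtot (HB (S l) ltac:(lia))). nra. }
  replace (- (gamma l * (w s 1%nat * w s l - total s * r * w s (S l))))
    with (gamma l * (- (w s 1%nat * w s l) + r * (total s * w s (S l)))) by ring.
  unfold neg_flux_const. fold Sg. pose proof Rm_pos.
  assert (0 <= B * Sg) by (apply Rmult_le_pos; lra).
  assert (0 <= Rm * (B * Sg)) by (apply Rmult_le_pos; lra).
  replace (2 * (G * INR m) * (1 + Rm) * B * Sg) with (G * INR m * (2 * (1 + Rm) * B * Sg)) by ring.
  apply scale_ge; [apply gamma_le_Gm; auto|nra|nra].
Qed.

Lemma rate_ge_of_nonpos k : (1 <= k <= m)%nat -> w s k <= 0 ->
  - (INR m * neg_flux_const * neg_total s) <= rate s k.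
Proof.
  intros Hk Hwk. set (c := neg_flux_const * neg_total s).
  assert (Hc : 0 <= c).
  { apply Rmult_le_pos; [|apply neg_total_nonneg]. unfold neg_flux_const.
    pose proof G_nonneg. pose proof Rm_pos. pose proof (pos_INR m).
    pose proof B_nonneg.
    apply Rmult_le_pos; [|lra]. apply Rmult_le_pos; [|lra]. nra. }
  assert (HmR : 2 <= INR m) by (replace 2 with (INR 2) by (simpl; ring); apply le_INR; auto).
  replace (- (INR m * neg_flux_const * neg_total s)) with (- (INR m * c)) by (unfold c; ring).
  unfold rate, trunc_rhs. destruct (Nat.eqb_spec k 1) as [->|Hk1].
  - assert (- c <= - flux s 1%nat) by (apply opp_flux_ge_of_nonpos; auto; lia).
    assert (Hsum : - (INR (m - 1) * c) <= - psum (flux s) (m - 1)).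
    { rewrite <- psum_opp. replace (- (INR (m - 1) * c)) with (INR (m - 1) * - c) by ring.
      rewrite <- psum_const. apply psum_le. intros l Hl.
      apply opp_flux_ge_of_nonpos; auto; lia. }
    rewrite minus_INR in Hsum by lia. simpl INR in Hsum. nra.
  - destruct (Nat.eqb_spec k m) as [->|Hkm].
    + assert (- c <= flux s (m - 1)).
      { apply flux_ge_of_next_nonpos; [lia|]. replace (S (m - 1)) with m by lia. auto. }
      nra.
    + assert (- c <= flux s (k - 1)).
      { apply flux_ge_of_next_nonpos; [lia|]. replace (S (k - 1)) with k by lia. auto. }
      assert (- c <= - flux s k) by (apply opp_flux_ge_of_nonpos; auto; lia). nra.
Qed.

End Quasi_positivity.

Definition negsq s := psum (fun k => Rmin (w s k) 0 ^ 2) m.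

Lemma negsq_nonneg s : 0 <= negsq s.
Proof. apply psum_nonneg. intros; apply pow2_ge_0. Qed.

Lemma is_derive_negsq s : 0 < s ->
  is_derive negsq s (psum (fun k => rate s k * (2 * Rmin (w s k) 0)) m).
Proof.
  intros Hs. apply (psum_derive (fun s k => Rmin (w s k) 0 ^ 2)). intros k Hk.
  apply (is_derive_comp (fun x => Rmin x 0 ^ 2) (fun s => w s k));
    [apply is_derive_Rmin_0_sq|apply is_derive_w; auto].
Qed.

(* On each coordinate that is negative, the rate is at least [- K * neg_total];
   Cauchy-Schwarz then bounds [neg_total ^ 2] by [m * negsq]. *)
Lemma negsq_derive_le s B : 0 < s -> 0 <= B -> (forall j, (1 <= j)%nat -> Rabs (w s j) <= B) ->
  Rabs (total s) <= B ->
  psum (fun k => rate s k * (2 * Rmin (w s k) 0)) m <= 2 * INR m * (INR m * neg_flux_const B) * negsq s.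
Proof.
  intros Hs HB0 HB HBtot. set (K := INR m * neg_flux_const B). set (Sg := neg_total s).
  assert (HK : 0 <= K).
  { unfold K, neg_flux_const. pose proof G_nonneg. pose proof Rm_pos. pose proof (pos_INR m).
    apply Rmult_le_pos; [lra|]. apply Rmult_le_pos; [|lra]. apply Rmult_le_pos; [|lra]. nra. }
  assert (HSg : 0 <= Sg) by apply neg_total_nonneg.
  apply Rle_trans with (psum (fun k => 2 * K * Sg * negpart (w s k)) m).
  - apply psum_le. intros k Hk. pose proof (negpart_nonneg (w s k)). destruct (Rle_dec (w s k) 0).
    + pose proof (rate_ge_of_nonpos s B ltac:(lra) HB HBtot k Hk r) as Hr. fold K Sg in Hr.
      rewrite Rmin_left, negpart_of_nonpos by auto. nra.
    + rewrite Rmin_right by lra. assert (0 <= K * Sg) by (apply Rmult_le_pos; lra). nra.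
  - rewrite psum_scal. change (psum (fun k => negpart (w s k)) m) with Sg.
    pose proof (psum_sq_le (fun j => negpart (w s j)) m) as Hcs.
    change (psum (fun j => negpart (w s j)) m) with Sg in Hcs.
    rewrite (psum_ext (fun k => negpart (w s k) ^ 2) (fun k => Rmin (w s k) 0 ^ 2)) in Hcs
      by (intros; unfold negpart; ring).
    fold (negsq s) in Hcs. assert (0 <= K * (INR m * negsq s - Sg ^ 2)) by (apply Rmult_le_pos; lra).
    replace (2 * K * Sg * Sg) with (2 * K * Sg ^ 2) by ring.
    replace (2 * INR m * K * negsq s) with (2 * K * (INR m * negsq s)) by ring. nra.
Qed.

Lemma negsq_gronwall t : 0 < t -> exists C, forall s, 0 < s <= t -> exp (- C * t) * negsq t <= negsq s.
Proof.
  intros Ht. destruct (w_bounded_on_0T t Ht) as [B [HB0 HB]].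
  set (B2 := (INR m + 1) * B). assert (Hm0 := pos_INR m).
  assert (HB2pos : 0 <= B2) by (unfold B2; apply Rmult_le_pos; lra).
  assert (HB2 : forall s, 0 < s <= t ->
    (forall j, (1 <= j)%nat -> Rabs (w s j) <= B2) /\ Rabs (total s) <= B2).
  { intros s Hs. split.
    - intros j Hj. destruct (Compare_dec.le_lt_dec j m).
      + specialize (HB j ltac:(lia) s Hs). unfold B2. nra.
      + rewrite w_support, Rabs_R0 by (lia || lra). unfold B2. nra.
    - unfold total. eapply Rle_trans; [apply psum_abs|].
      eapply Rle_trans; [apply (psum_le _ (fun _ => B)); intros; apply HB; auto|].
      rewrite psum_const. unfold B2. nra. }
  set (C := 2 * INR m * (INR m * neg_flux_const B2)).
  assert (HC : 0 <= C).
  { unfold C, neg_flux_const, B2. pose proof G_nonneg. pose proof Rm_pos.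
    assert (0 <= G * INR m) by nra. assert (0 <= (INR m + 1) * B) by nra.
    assert (0 <= 2 * (G * INR m) * (1 + Rm)) by nra.
    assert (0 <= 2 * (G * INR m) * (1 + Rm) * ((INR m + 1) * B)) by nra. nra. }
  exists C. intros s Hs.
  assert (Hgr := exp_weighted_le (fun x => - negsq x)
    (fun x => - psum (fun k => rate x k * (2 * Rmin (w x k) 0)) m) (- C) s t ltac:(lra)).
  assert (exp (- C * s) <= 1).
  { rewrite <- exp_0. destruct (Req_dec C 0) as [->|HC0]; [right; f_equal; ring|].
    left. apply exp_increasing. nra. }
  pose proof (negsq_nonneg s). pose proof (exp_pos (- C * s)).
  cut (exp (- C * t) * negsq t <= exp (- C * s) * negsq s); [nra|].
  cut (exp (- C * s) * - negsq s <= exp (- C * t) * - negsq t); [lra|]. apply Hgr.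
  - intros x Hx. apply (is_derive_opp negsq), is_derive_negsq. lra.
  - intros x Hx. destruct (HB2 x ltac:(lra)) as [Hj Htot].
    pose proof (negsq_derive_le x B2 ltac:(lra) HB2pos Hj Htot) as Hd. fold C in Hd. lra.
Qed.

Lemma negsq_small_near_0 eps t : 0 < eps -> 0 < t -> exists s, 0 < s < t /\ negsq s <= eps.
Proof.
  intros He Ht. assert (HmR : 0 < INR m) by (apply lt_0_INR; lia).
  set (e := Rmin 1 (eps / INR m)).
  assert (He0 : 0 < e) by (apply Rmin_pos; [lra|apply Rdiv_lt_0_compat; lra]).
  assert (He1 : e <= 1) by apply Rmin_l. assert (Hem : e <= eps / INR m) by apply Rmin_r.
  destruct (w_near_initial e t He0 Ht) as [s [Hs Hnear]]. exists s. split; auto.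
  apply Rle_trans with (psum (fun _ => e) m).
  - apply psum_le. intros k Hk. specialize (Hnear k Hk). apply Rabs_lt_between in Hnear.
    pose proof (hy_nonneg k ltac:(lia)). unfold Rmin at 1. destruct (Rle_dec (w s k) 0); simpl; nra.
  - rewrite psum_const. apply (Rmult_le_reg_r (/ INR m)); [apply Rinv_0_lt_compat; lra|].
    replace (INR m * e * / INR m) with e by (field; lra). exact Hem.
Qed.

Lemma w_nonneg t k : 0 <= t -> (1 <= k)%nat -> 0 <= w t k.
Proof.
  intros Ht Hk. destruct (Compare_dec.le_lt_dec k m) as [Hkm|Hkm]; [|rewrite w_support; auto; lra].
  destruct (Req_dec t 0) as [->|Ht0]; [rewrite w_initial by lia; apply hy_nonneg; auto|].
  destruct (negsq_gronwall t ltac:(lra)) as [C HC].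
  assert (Hzero : exp (- C * t) * negsq t <= 0).
  { apply Rle_plus_epsilon. intros eps He.
    destruct (negsq_small_near_0 eps t He ltac:(lra)) as [s [Hs Hsmall]].
    specialize (HC s ltac:(lra)). lra. }
  assert (Hneg : negsq t <= 0).
  { pose proof (exp_pos (- C * t)). destruct (Rle_dec (negsq t) 0); auto.
    assert (0 < exp (- C * t) * negsq t) by (apply Rmult_lt_0_compat; lra). lra. }
  assert (Hterm : Rmin (w t k) 0 ^ 2 <= negsq t)
    by (apply (psum_term_le (fun k => Rmin (w t k) 0 ^ 2)); [intros; apply pow2_ge_0|lia]).
  destruct (Rle_dec 0 (w t k)); auto. rewrite Rmin_left in Hterm by lra. nra.
Qed.

Definition mass t := psum (fun k => INR k * w t k) m.

(* The weak form with [u k = k] vanishes since [(l + 1) - l - 1 = 0]. *)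
Lemma is_derive_mass t : 0 < t -> is_derive mass t 0.
Proof.
  intros Ht. replace 0 with (psum (fun k => rate t k * INR k) m).
  - apply (psum_derive (fun s k => INR k * w s k)). intros k Hk.
    rewrite Rmult_comm. apply is_derive_scal, is_derive_w; auto.
  - unfold rate. rewrite trunc_rhs_weak_form by auto.
    rewrite (psum_ext _ (fun _ => 0)) by (intros; rewrite S_INR; simpl; ring).
    rewrite psum_const. ring.
Qed.

Lemma mass_conserved t : 0 <= t -> mass t = psum (fun k => INR k * y k) m.
Proof.
  intros Ht. destruct (Req_dec t 0) as [->|Ht0].
  { apply psum_ext. intros k Hk. rewrite w_initial; auto. }
  apply Rminus_diag_uniq, eq_0_of_abs_le_eps. intros eps He.
  assert (HmR : 0 < INR m) by (apply lt_0_INR; lia).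
  set (e := eps / (INR m * INR m)). assert (He0 : 0 < e) by (apply Rdiv_lt_0_compat; nra).
  destruct (w_near_initial e t He0 ltac:(lra)) as [s [Hs Hnear]].
  assert (Hst : mass t = mass s).
  { destruct (mvt_derive mass (fun _ => 0) s t) as [c [_ Hc]];
      [lra|intros; apply is_derive_mass; lra|lra]. }
  rewrite Hst. unfold mass. rewrite <- psum_minus. eapply Rle_trans; [apply psum_abs|].
  apply Rle_trans with (psum (fun _ => INR m * e) m).
  - apply psum_le. intros k Hk.
    rewrite <- Rmult_minus_distr_l, Rabs_mult, Rabs_right by (apply Rle_ge, pos_INR).
    apply Rmult_le_compat; [apply pos_INR|apply Rabs_pos|apply le_INR; lia|left; apply Hnear; auto].
  - rewrite psum_const. unfold e. right. field. lra.
Qed.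

Lemma w_mass_le t n : 0 <= t -> psum (fun k => INR k * w t k) n <= rh.
Proof.
  intros Ht. assert (Hmass := hy_mass m).
  rewrite <- (mass_conserved t Ht) in Hmass. unfold mass in Hmass.
  destruct (Compare_dec.le_lt_dec n m).
  - eapply Rle_trans; [|exact Hmass]. apply psum_le_mono; auto.
    intros; apply Rmult_le_pos; [apply pos_INR|apply w_nonneg; auto].
  - rewrite (psum_support _ m n); auto. intros; rewrite w_support; auto; ring. lia.
Qed.

Lemma w_le_rh t k : 0 <= t -> (1 <= k)%nat -> w t k <= rh.
Proof.
  intros Ht Hk. eapply Rle_trans; [|apply (w_mass_le t k Ht)].
  eapply Rle_trans; [|apply (psum_term_le (fun k => INR k * w t k) k k)]; [| |lia].
  - assert (1 <= INR k) by (apply (le_INR 1); auto). pose proof (w_nonneg t k Ht Hk). nra.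
  - intros; apply Rmult_le_pos; [apply pos_INR|apply w_nonneg; auto; lia].
Qed.

Lemma total_nonneg t : 0 <= t -> 0 <= total t.
Proof. intros Ht. apply psum_nonneg. intros; apply w_nonneg; auto; lia. Qed.

Lemma total_le_rh t : 0 <= t -> total t <= rh.
Proof.
  intros Ht. eapply Rle_trans; [|apply (w_mass_le t m Ht)]. apply psum_le. intros k Hk.
  assert (1 <= INR k) by (apply (le_INR 1); lia). pose proof (w_nonneg t k Ht ltac:(lia)). nra.
Qed.

Lemma flux_le_aggregation s l : 0 <= s -> (1 <= l)%nat -> flux s l <= gamma l * (w s 1%nat * w s l).
Proof.
  intros Hs Hl. rewrite flux_eq by auto. pose proof (hgamma_pos l Hl).
  assert (0 <= total s * (q l / q (S l)) * w s (S l)).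
  { apply Rmult_le_pos; [apply Rmult_le_pos|]; [apply total_nonneg; auto|left; apply ratio_pos; auto|].
    apply w_nonneg; auto. }
  nra.
Qed.

Lemma flux_ge_aggregation_sub s l : 0 <= s -> (1 <= l)%nat ->
  gamma l * (w s 1%nat * w s l) - G * INR (S l) * rh * Rm * w s (S l) <= flux s l.
Proof.
  intros Hs Hl. rewrite flux_eq by auto.
  assert (Hloss : gamma l * (total s * (q l / q (S l))) <= G * INR (S l) * rh * Rm).
  { replace (G * INR (S l) * rh * Rm) with ((G * INR (S l)) * (rh * Rm)) by ring.
    pose proof (hgamma_pos l Hl). pose proof (total_nonneg s Hs). pose proof (ratio_pos l Hl).
    apply Rmult_le_compat; [lra|apply Rmult_le_pos; lra| |].
    - eapply Rle_trans; [apply hgamma_le; auto|].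
      apply Rmult_le_compat_l; [apply G_nonneg|apply le_INR; lia].
    - apply Rmult_le_compat; [lra|lra|apply total_le_rh; auto|apply hratio_le; auto]. }
  pose proof (w_nonneg s (S l) Hs ltac:(lia)).
  assert (gamma l * (total s * (q l / q (S l))) * w s (S l) <= G * INR (S l) * rh * Rm * w s (S l))
    by (apply Rmult_le_compat_r; auto).
  nra.
Qed.

Lemma gamma_w_sum_le t n : 0 <= t -> psum (fun l => gamma l * w t l) n <= G * rh.
Proof.
  intros Ht. eapply Rle_trans; [apply (psum_le _ (fun l => G * (INR l * w t l)))|].
  - intros l Hl. rewrite <- Rmult_assoc. apply Rmult_le_compat_r; [apply w_nonneg; auto; lia|].
    apply hgamma_le; lia.
  - rewrite psum_scal. apply Rmult_le_compat_l; [apply G_nonneg|apply w_mass_le; auto].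
Qed.

Lemma rate_1_ge s : 0 < s -> - (2 * G * rh) * w s 1%nat <= rate s 1%nat.
Proof.
  intros Hs. unfold rate, trunc_rhs. simpl Nat.eqb. cbv iota.
  pose proof (w_nonneg s 1 ltac:(lra) (le_n _)) as Hw1.
  assert (Hsum : psum (flux s) (m - 1) <= w s 1%nat * (G * rh)).
  { eapply Rle_trans; [apply (psum_le _ (fun l => w s 1%nat * (gamma l * w s l)))|].
    - intros l Hl. eapply Rle_trans; [apply flux_le_aggregation; lra || lia|]. right; ring.
    - rewrite psum_scal. apply Rmult_le_compat_l; auto. apply gamma_w_sum_le; lra. }
  assert (H1 : flux s 1%nat <= w s 1%nat * (G * rh)).
  { eapply Rle_trans; [apply flux_le_aggregation; lra || lia|].
    pose proof (hgamma_pos 1 (le_n _)). pose proof (hgamma_le 1 (le_n _)). simpl INR in *.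
    pose proof (w_le_rh s 1 ltac:(lra) (le_n _)).
    replace (gamma 1%nat * (w s 1%nat * w s 1%nat)) with (w s 1%nat * (gamma 1%nat * w s 1%nat)) by ring.
    apply Rmult_le_compat_l; auto. apply Rmult_le_compat; lra. }
  lra.
Qed.

Lemma w1_pos t : 0 < t -> 0 < w t 1%nat.
Proof.
  intros Ht. destruct (w_near_initial (y 1%nat / 2) t ltac:(lra) Ht) as [s [Hs Hnear]].
  specialize (Hnear 1%nat ltac:(lia)). apply Rabs_lt_between in Hnear.
  assert (Hexp : exp (2 * G * rh * s) * w s 1%nat <= exp (2 * G * rh * t) * w t 1%nat).
  { apply (exp_weighted_le (fun x => w x 1%nat) (fun x => rate x 1%nat)); [lra| |].
    - intros x Hx. apply is_derive_w; [lra|lia].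
    - intros x Hx. pose proof (rate_1_ge x ltac:(lra)). lra. }
  pose proof (exp_pos (2 * G * rh * s)). pose proof (exp_pos (2 * G * rh * t)).
  assert (0 < exp (2 * G * rh * s) * w s 1%nat) by (apply Rmult_lt_0_compat; lra).
  destruct (Rle_dec (w t 1%nat) 0); [|lra]. nra.
Qed.

Lemma rate_ge_aggregation s k : 0 < s -> (2 <= k <= m)%nat ->
  gamma (k - 1)%nat * (w s 1%nat * w s (k - 1)%nat) - G * INR k * rh * (1 + Rm) * w s k <= rate s k.
Proof.
  intros Hs Hk. pose proof (flux_ge_aggregation_sub s (k - 1) ltac:(lra) ltac:(lia)) as Hin.
  replace (S (k - 1)) with k in Hin by lia.
  pose proof (w_nonneg s k ltac:(lra) ltac:(lia)). pose proof G_nonneg. pose proof rh_pos.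
  assert (0 <= G * INR k * rh * w s k) by (pose proof (pos_INR k); repeat apply Rmult_le_pos; lra).
  unfold rate, trunc_rhs. destruct (Nat.eqb_spec k 1) as [|_]; [lia|].
  destruct (Nat.eqb_spec k m) as [->|Hkm]; [lra|].
  assert (Hout : flux s k <= G * INR k * rh * w s k).
  { eapply Rle_trans; [apply flux_le_aggregation; lra || lia|].
    replace (gamma k * (w s 1%nat * w s k)) with ((gamma k * w s 1%nat) * w s k) by ring.
    apply Rmult_le_compat_r; auto. pose proof (hgamma_pos k ltac:(lia)).
    apply Rmult_le_compat;
      [lra|apply w_nonneg; lra || lia|apply hgamma_le; lia|apply w_le_rh; lra || lia]. }
  lra.
Qed.

Lemma w_pos k : (1 <= k <= m)%nat -> forall t, 0 < t -> 0 < w t k.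
Proof.
  induction k as [|k IH]; intros Hk t Ht; [lia|]. destruct k as [|k]; [apply w1_pos; auto|].
  set (C := G * INR (S (S k)) * rh * (1 + Rm)).
  assert (Hlt : exp (C * (t / 2)) * w (t / 2) (S (S k)) < exp (C * t) * w t (S (S k))).
  { apply (exp_weighted_lt (fun x => w x (S (S k))) (fun x => rate x (S (S k)))); [lra| |].
    - intros x Hx. apply is_derive_w; [lra|lia].
    - intros x Hx. pose proof (rate_ge_aggregation x (S (S k)) ltac:(lra) ltac:(lia)) as Hr.
      replace (S (S k) - 1)%nat with (S k) in Hr by lia. fold C in Hr.
      assert (0 < gamma (S k) * (w x 1%nat * w x (S k))).
      { apply Rmult_lt_0_compat; [apply hgamma_pos; lia|].
        apply Rmult_lt_0_compat; [apply w1_pos|apply IH]; lra || lia. }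
      lra. }
  pose proof (exp_pos (C * (t / 2))). pose proof (exp_pos (C * t)).
  pose proof (w_nonneg (t / 2) (S (S k)) ltac:(lra) ltac:(lia)).
  assert (0 <= exp (C * (t / 2)) * w (t / 2) (S (S k))) by (apply Rmult_le_pos; lra).
  destruct (Rle_dec (w t (S (S k))) 0); [|lra]. nra.
Qed.

Lemma total_pos t : 0 < t -> 0 < total t.
Proof.
  intros Ht. apply Rlt_le_trans with (w t 1%nat); [apply w1_pos; auto|].
  apply (psum_term_le (w t)); [intros; apply w_nonneg; lra || lia|lia].
Qed.

Lemma flux_abs_le t l : 0 <= t -> (1 <= l)%nat ->
  Rabs (flux t l) <= G * rh * (INR l * w t l) + G * rh * Rm * (INR (S l) * w t (S l)).
Proof.
  intros Ht Hl. pose proof (w_nonneg t l Ht Hl). pose proof (w_nonneg t (S l) Ht ltac:(lia)).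
  eapply Rle_trans; [apply Jp_abs_le; auto|].
  - split; [apply w_nonneg|apply w_le_rh]; auto.
  - unfold Nz. rewrite (Series_support (w t) m) by (intros; apply w_support; auto).
    split; [apply total_nonneg|apply total_le_rh]; auto.
  - pose proof rh_pos. pose proof Rm_pos.
    assert (gamma l <= G * INR l) by (apply hgamma_le; auto).
    assert (gamma l <= G * INR (S l)) by (eapply Rle_trans; [apply hgamma_le; auto|];
      apply Rmult_le_compat_l; [apply G_nonneg|apply le_INR; lia]).
    assert (0 <= rh * w t l) by (apply Rmult_le_pos; lra).
    assert (0 <= rh * Rm * w t (S l)) by (apply Rmult_le_pos; [apply Rmult_le_pos|]; lra).
    rewrite Rmult_plus_distr_l.
    apply Rplus_le_compat; [apply Rle_trans with (G * INR l * (rh * w t l))|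
                            apply Rle_trans with (G * INR (S l) * (rh * Rm * w t (S l)))];
      try (apply Rmult_le_compat_r; auto); right; ring.
Qed.

Lemma psum_flux_abs_le t : 0 <= t -> psum (fun l => Rabs (flux t l)) (m - 1) <= G * Kdiss.
Proof.
  intros Ht. eapply Rle_trans; [apply psum_le; intros l Hl; apply flux_abs_le; auto; lia|].
  rewrite psum_plus, !psum_scal. unfold Kdiss. pose proof G_nonneg. pose proof rh_pos. pose proof Rm_pos.
  assert (psum (fun k => INR k * w t k) (m - 1) <= rh) by (apply w_mass_le; auto).
  assert (psum (fun k => INR (S k) * w t (S k)) (m - 1) <= rh).
  { eapply Rle_trans; [|apply (w_mass_le t (S (m - 1)) Ht)].
    rewrite (psum_shift (fun k => INR k * w t k)).
    assert (0 <= INR 1 * w t 1%nat) by (apply Rmult_le_pos; [apply pos_INR|apply w_nonneg; auto]). lra. }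
  assert (0 <= G * rh) by (apply Rmult_le_pos; lra).
  assert (0 <= G * rh * Rm) by (apply Rmult_le_pos; lra).
  assert (G * rh * psum (fun k => INR k * w t k) (m - 1) <= G * rh * rh)
    by (apply Rmult_le_compat_l; lra).
  assert (G * rh * Rm * psum (fun k => INR (S k) * w t (S k)) (m - 1) <= G * rh * Rm * rh)
    by (apply Rmult_le_compat_l; lra).
  nra.
Qed.

Lemma flux_abs_le_GK t l : 0 <= t -> (1 <= l < m)%nat -> Rabs (flux t l) <= G * Kdiss.
Proof.
  intros Ht Hl. eapply Rle_trans; [|apply (psum_flux_abs_le t Ht)].
  apply (psum_term_le (fun l => Rabs (flux t l))); [intros; apply Rabs_pos|lia].
Qed.

Lemma rate_abs_le t k : 0 <= t -> (1 <= k <= m)%nat -> Rabs (rate t k) <= 2 * (G * Kdiss).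
Proof.
  intros Ht Hk. unfold rate, trunc_rhs.
  assert (Hsum : Rabs (psum (flux t) (m - 1)) <= G * Kdiss)
    by (eapply Rle_trans; [apply psum_abs|apply psum_flux_abs_le; auto]).
  assert (0 <= G * Kdiss) by (apply Rmult_le_pos; [apply G_nonneg|left; apply Kdiss_pos]).
  destruct (Nat.eqb_spec k 1) as [->|Hk1]; [|destruct (Nat.eqb_spec k m) as [->|Hkm]].
  - assert (Rabs (flux t 1) <= G * Kdiss) by (apply flux_abs_le_GK; auto; lia).
    unfold Rminus. eapply Rle_trans; [apply Rabs_triang|]. rewrite !Rabs_Ropp. lra.
  - assert (Rabs (flux t (m - 1)) <= G * Kdiss) by (apply flux_abs_le_GK; auto; lia). lra.
  - assert (Rabs (flux t (k - 1)) <= G * Kdiss) by (apply flux_abs_le_GK; auto; lia).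
    assert (Rabs (flux t k) <= G * Kdiss) by (apply flux_abs_le_GK; auto; lia).
    unfold Rminus. eapply Rle_trans; [apply Rabs_triang|]. rewrite Rabs_Ropp. lra.
Qed.

Lemma psum_rate t : psum (rate t) m = - psum (flux t) (m - 1).
Proof.
  rewrite (psum_ext _ (fun k => rate t k * 1)) by (intros; ring). unfold rate.
  rewrite trunc_rhs_weak_form by auto. rewrite <- psum_opp. apply psum_ext. intros; ring.
Qed.

Lemma is_derive_total t : 0 < t -> is_derive total t (- psum (flux t) (m - 1)).
Proof. intros Ht. rewrite <- psum_rate. apply (psum_derive w). intros; apply is_derive_w; auto. Qed.

Lemma Rabs_mul_derive_le a b da db M D : Rabs a <= M -> Rabs b <= M -> Rabs da <= D -> Rabs db <= D ->
  Rabs (da * b + a * db) <= 2 * M * D.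
Proof.
  intros Ha Hb Hda Hdb. eapply Rle_trans; [apply Rabs_triang|]. rewrite !Rabs_mult.
  pose proof (Rabs_pos a). pose proof (Rabs_pos b). pose proof (Rabs_pos da). pose proof (Rabs_pos db).
  assert (Rabs da * Rabs b <= D * M) by (apply Rmult_le_compat; lra).
  assert (Rabs a * Rabs db <= M * D) by (apply Rmult_le_compat; lra). lra.
Qed.

Definition flux_derive x l := gamma l *
  ((rate x 1%nat * w x l + w x 1%nat * rate x l)
   - (q l / q (S l)) * ((- psum (flux x) (m - 1)) * w x (S l) + total x * rate x (S l))).

Lemma is_derive_flux x l : 0 < x -> (1 <= l < m)%nat ->
  is_derive (fun s => flux s l) x (flux_derive x l).
Proof.
  intros Hx Hl.
  apply (is_derive_ext_loc
           (fun s => gamma l * (w s 1%nat * w s l - (q l / q (S l)) * (total s * w s (S l))))).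
  { exists (mkposreal x Hx). intros s Hs. change R in s. apply Rabs_lt_between in Hs.
    unfold minus, plus, opp in Hs; simpl in Hs. cbv beta. rewrite flux_eq by lra.
    match goal with |- ?a = ?b => change (@eq R a b) end. ring. }
  unfold flux_derive. apply is_derive_scal, (is_derive_minus (fun s => w s 1%nat * w s l)).
  - apply (Derive.is_derive_mult (fun s => w s 1%nat) (fun s => w s l)); apply is_derive_w; auto; lia.
  - apply is_derive_scal, (Derive.is_derive_mult total (fun s => w s (S l)));
      [apply is_derive_total|apply is_derive_w]; auto; lia.
Qed.

Lemma flux_derive_abs_le x l : 0 < x -> (1 <= l < m)%nat -> Rabs (flux_derive x l) <= flux_lip l.
Proof.
  intros Hx Hl. unfold flux_derive, flux_lip. pose proof (hgamma_pos l ltac:(lia)).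
  pose proof G_nonneg. pose proof Kdiss_pos. pose proof rh_pos. pose proof Rm_pos.
  set (D := 2 * (G * Kdiss)). assert (HD : 0 <= D) by (unfold D; nra).
  assert (Hval : forall k, (1 <= k)%nat -> Rabs (w x k) <= rh).
  { intros k Hk. rewrite Rabs_right by (apply Rle_ge, w_nonneg; lra || lia). apply w_le_rh; lra || lia. }
  assert (Hrate : forall k, (1 <= k <= m)%nat -> Rabs (rate x k) <= D)
    by (intros; apply rate_abs_le; auto; lra).
  assert (Htot : Rabs (total x) <= rh)
    by (rewrite Rabs_right by (apply Rle_ge, total_nonneg; lra); apply total_le_rh; lra).
  assert (Hdtot : Rabs (- psum (flux x) (m - 1)) <= D).
  { rewrite Rabs_Ropp. eapply Rle_trans; [apply psum_abs|].
    eapply Rle_trans; [apply psum_flux_abs_le; lra|].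
    unfold D. nra. }
  assert (Hagg := Rabs_mul_derive_le (w x 1%nat) (w x l) (rate x 1%nat) (rate x l) rh D
                  (Hval 1%nat (le_n _)) (Hval l ltac:(lia))
                  (Hrate 1%nat ltac:(lia)) (Hrate l ltac:(lia))).
  assert (Hfrag := Rabs_mul_derive_le (total x) (w x (S l)) (- psum (flux x) (m - 1))
                  (rate x (S l)) rh D Htot (Hval (S l) ltac:(lia)) Hdtot (Hrate (S l) ltac:(lia))).
  assert (Hr : Rabs (q l / q (S l)) <= Rm)
    by (rewrite Rabs_right by (apply Rle_ge, Rlt_le, ratio_pos; lia); apply hratio_le; lia).
  rewrite Rabs_mult, (Rabs_right (gamma l)) by lra.
  replace (4 * gamma l * (G * Kdiss) * rh * (1 + Rm)) with (gamma l * (2 * rh * D * (1 + Rm)))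
    by (unfold D; ring).
  apply Rmult_le_compat_l; [lra|]. unfold Rminus. eapply Rle_trans; [apply Rabs_triang|].
  rewrite Rabs_Ropp, Rabs_mult. assert (0 <= 2 * rh * D) by nra.
  assert (Rabs (q l / q (S l)) * Rabs ((- psum (flux x) (m - 1)) * w x (S l) + total x * rate x (S l))
          <= Rm * (2 * rh * D)) by (apply Rmult_le_compat; auto; apply Rabs_pos).
  lra.
Qed.

Lemma flux_lipschitz l t s : (1 <= l < m)%nat -> 0 < t <= s ->
  Rabs (flux s l - flux t l) <= flux_lip l * (s - t).
Proof.
  intros Hl Hts. destruct (mvt_derive (fun x => flux x l) (fun x => flux_derive x l) t s) as [c [Hc ->]];
    [lra|intros; apply is_derive_flux; auto; lra|].
  rewrite Rabs_mult, (Rabs_right (s - t)) by lra. apply Rmult_le_compat_r; [lra|].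
  apply flux_derive_abs_le; auto; lra.
Qed.

Definition logratio t k := ln (w t k) - ln (q k) - ln (total t).

(* [(w_k * logratio_k)' = rate_k * logratio_k + rate_k - w_k * total' / total], and the last
   two terms cancel in the sum because [sum_k rate_k = total']. *)
Lemma is_derive_entropy t : 0 < t ->
  is_derive (fun s => entropy q m (w s)) t (psum (fun k => rate t k * logratio t k) m).
Proof.
  intros Ht. set (dN := - psum (flux t) (m - 1)). assert (HN := total_pos t Ht).
  replace (psum (fun k => rate t k * logratio t k) m)
    with (psum (fun k => rate t k * logratio t k + w t k * (rate t k / w t k - dN / total t)) m).
  - apply (psum_derive (fun s k => w s k * logratio s k)). intros k Hk.
    apply (Derive.is_derive_mult (fun s => w s k) (fun s => logratio s k)); [apply is_derive_w; auto|].
    assert (Hwk := w_pos k Hk t Ht).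
    apply (is_derive_minus (fun s => ln (w s k) - ln (q k)) (fun s => ln (total s))).
    + replace (rate t k / w t k) with (rate t k * / w t k - 0) by (unfold Rdiv; ring).
      apply (is_derive_minus (fun s => ln (w s k)) (fun _ => ln (q k))).
      * apply (is_derive_comp ln (fun s => w s k)); [apply is_derive_ln; auto|].
        apply is_derive_w; auto.
      * exact (@is_derive_const R_AbsRing R_NormedModule (ln (q k)) t).
    + unfold Rdiv. apply (is_derive_comp ln total); [apply is_derive_ln; auto|].
      apply is_derive_total; auto.
  - rewrite (psum_ext _ (fun k => rate t k * logratio t k + (rate t k - dN / total t * w t k))).
    2:{ intros k Hk. pose proof (w_pos k Hk t Ht). field. lra. }
    rewrite psum_plus, psum_minus, psum_scal, psum_rate. fold dN. fold (total t). field. lra.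
Qed.

Definition fwd t l := w t 1%nat * w t l.
Definition bwd t l := total t * (q l / q (S l)) * w t (S l).

Lemma fwd_bwd_pos t l : 0 < t -> (1 <= l < m)%nat -> 0 < fwd t l /\ 0 < bwd t l.
Proof.
  intros Ht Hl. unfold fwd, bwd. split; [apply Rmult_lt_0_compat; apply w_pos; auto; lia|].
  apply Rmult_lt_0_compat; [apply Rmult_lt_0_compat|apply w_pos]; auto; try lia.
  - apply total_pos; auto.
  - apply ratio_pos; lia.
Qed.

Lemma entropy_derive_eq t : 0 < t -> psum (fun k => rate t k * logratio t k) m =
  - psum (fun l => gamma l * (fwd t l - bwd t l) * (ln (fwd t l) - ln (bwd t l))) (m - 1).
Proof.
  intros Ht. unfold rate. rewrite trunc_rhs_weak_form, <- psum_opp by auto. apply psum_ext.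
  intros l Hl. rewrite flux_eq by lra. unfold logratio, fwd, bwd.
  assert (H1 := w_pos 1 ltac:(lia) t Ht). assert (Hl' := w_pos l ltac:(lia) t Ht).
  assert (Hl'' := w_pos (S l) ltac:(lia) t Ht). assert (HN := total_pos t Ht).
  assert (Hq := hq_pos l ltac:(lia)). assert (Hq' := hq_pos (S l) ltac:(lia)).
  assert (Hr : 0 < q l / q (S l)) by (apply ratio_pos; lia).
  assert (0 < total t * (q l / q (S l))) by (apply Rmult_lt_0_compat; auto).
  rewrite !ln_mult, ln_div, hq1, ln_1 by auto. ring.
Qed.

(* Each term of the dissipation is [gamma (a - b) (ln a - ln b) >= gamma (a - b)^2 / (a + b)],
   and [a + b <= Kdiss]. *)
Lemma entropy_derive_le t l : 0 < t -> (1 <= l < m)%nat ->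
  psum (fun k => rate t k * logratio t k) m <= - (flux t l ^ 2 / (gamma l * Kdiss)).
Proof.
  intros Ht Hl. rewrite entropy_derive_eq by auto.
  set (T := fun l => gamma l * (fwd t l - bwd t l) * (ln (fwd t l) - ln (bwd t l))).
  assert (HT : forall l, (1 <= l < m)%nat ->
    gamma l * ((fwd t l - bwd t l) ^ 2 / (fwd t l + bwd t l)) <= T l).
  { intros j Hj. unfold T. rewrite Rmult_assoc. destruct (fwd_bwd_pos t j Ht Hj).
    apply Rmult_le_compat_l; [left; apply hgamma_pos; lia|]. apply sqr_sub_div_le_mul_ln; auto. }
  assert (HT0 : forall l, (1 <= l <= m - 1)%nat -> 0 <= T l).
  { intros j Hj. eapply Rle_trans; [|apply HT; lia]. destruct (fwd_bwd_pos t j Ht ltac:(lia)).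
    apply Rmult_le_pos; [left; apply hgamma_pos; lia|]. apply Rdiv_le_0_compat; [apply pow2_ge_0|lra]. }
  assert (T l <= psum T (m - 1)) by (apply psum_term_le; auto; lia).
  cut (flux t l ^ 2 / (gamma l * Kdiss) <= T l); [lra|].
  eapply Rle_trans; [|apply HT; auto]. destruct (fwd_bwd_pos t l Ht Hl) as [Ha Hb].
  assert (Hg := hgamma_pos l ltac:(lia)). pose proof Kdiss_pos.
  assert (Hab : fwd t l + bwd t l <= Kdiss).
  { unfold fwd, bwd, Kdiss. pose proof rh_pos. pose proof Rm_pos.
    assert (w t 1%nat * w t l <= rh * rh)
      by (apply Rmult_le_compat; try apply w_nonneg; try apply w_le_rh; lra || lia).
    assert (total t * (q l / q (S l)) * w t (S l) <= rh * Rm * rh).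
    { apply Rmult_le_compat; [|apply w_nonneg; lra || lia| |apply w_le_rh; lra || lia].
      - apply Rmult_le_pos; [apply total_nonneg; lra|left; apply ratio_pos; lia].
      - apply Rmult_le_compat; [apply total_nonneg; lra|left; apply ratio_pos; lia| |].
        + apply total_le_rh; lra.
        + apply hratio_le; lia. }
    nra. }
  unfold flux. fold (flux t l). rewrite flux_eq by lra. fold (fwd t l) (bwd t l).
  replace ((gamma l * (fwd t l - bwd t l)) ^ 2 / (gamma l * Kdiss))
    with (gamma l * ((fwd t l - bwd t l) ^ 2 / Kdiss)) by (field; split; lra).
  apply Rmult_le_compat_l; [lra|]. unfold Rdiv. apply Rmult_le_compat_l; [apply pow2_ge_0|].
  apply Rinv_le_contravar; lra.
Qed.

Lemma entropy_antitone t s : 0 < t <= s -> entropy q m (w s) <= entropy q m (w t).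
Proof.
  intros Hts. cut (entropy q m (w s) - entropy q m (w t) <= 0 * (s - t)); [lra|].
  apply (derive_le_incr (fun x => entropy q m (w x))
           (fun x => psum (fun k => rate x k * logratio x k) m)); [lra| |].
  - intros x Hx. apply is_derive_entropy. lra.
  - intros x Hx. eapply Rle_trans; [apply (entropy_derive_le x 1); lra || lia|].
    pose proof (hgamma_pos 1 (le_n _)). pose proof Kdiss_pos.
    assert (0 <= flux x 1 ^ 2 / (gamma 1 * Kdiss))
      by (apply Rdiv_le_0_compat; [apply pow2_ge_0|apply Rmult_lt_0_compat; auto]). lra.
Qed.

Lemma entropy_drop l a b e : (1 <= l < m)%nat -> 0 < a <= b -> 0 <= e ->
  (forall x, a <= x <= b -> e <= Rabs (flux x l)) ->
  entropy q m (w b) <= entropy q m (w a) - e ^ 2 / (gamma l * Kdiss) * (b - a).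
Proof.
  intros Hl Hab He Hx.
  cut (entropy q m (w b) - entropy q m (w a) <= - (e ^ 2 / (gamma l * Kdiss)) * (b - a)); [lra|].
  apply (derive_le_incr (fun x => entropy q m (w x))
           (fun x => psum (fun k => rate x k * logratio x k) m)); [lra| |].
  - intros x Hx'. apply is_derive_entropy. lra.
  - intros x Hx'. eapply Rle_trans; [apply (entropy_derive_le x l); lra || lia|].
    apply Ropp_le_contravar. assert (Hg := hgamma_pos l ltac:(lia)). pose proof Kdiss_pos.
    unfold Rdiv. apply Rmult_le_compat_r; [left; apply Rinv_0_lt_compat, Rmult_lt_0_compat; auto|].
    rewrite <- (pow2_abs (flux x l)). apply pow_incr. specialize (Hx x Hx'). lra.
Qed.

Lemma entropy_le t : 0 < t -> entropy q m (w t) <= be * rh.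
Proof.
  intros Ht. unfold entropy. fold (total t).
  eapply Rle_trans; [apply (psum_le _ (fun k => be * (INR k * w t k)))|].
  - intros k Hk. pose proof (w_pos k Hk t Ht). pose proof (hln_q k ltac:(lia)) as Hq.
    assert (ln (w t k) <= ln (total t)).
    { apply ln_le; auto. apply (psum_term_le (w t)); auto. intros; apply w_nonneg; lra || lia. }
    apply Rabs_le_between in Hq. nra.
  - rewrite psum_scal. apply Rmult_le_compat_l; [apply be_nonneg|apply w_mass_le; lra].
Qed.

(* Uses [x ln x >= - k x - exp (- (k + 1))] coordinatewise, whose error terms sum to at most 1. *)
Lemma entropy_ge t : 0 < t -> - (rh + 1 + rh * rh + be * rh) <= entropy q m (w t).
Proof.
  intros Ht. unfold entropy. fold (total t).
  rewrite (psum_ext _ (fun k => (w t k * ln (w t k) - w t k * ln (q k)) - ln (total t) * w t k))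
    by (intros; ring).
  rewrite psum_minus, psum_scal, psum_minus. fold (total t).
  assert (H1 : - rh - 1 <= psum (fun k => w t k * ln (w t k)) m).
  { eapply Rle_trans; [|apply (psum_le (fun k => - (INR k * w t k) - exp (- (INR k + 1))))].
    - rewrite psum_minus, psum_opp. pose proof (w_mass_le t m ltac:(lra)).
      pose proof (psum_exp_le_1 m). lra.
    - intros k Hk. pose proof (xlnx_ge (w t k) k (w_pos k Hk t Ht)). lra. }
  assert (H2 : psum (fun k => w t k * ln (q k)) m <= be * rh).
  { eapply Rle_trans; [apply (psum_le _ (fun k => be * (INR k * w t k)))|].
    - intros k Hk. pose proof (w_pos k Hk t Ht). pose proof (hln_q k ltac:(lia)) as Hq.
      apply Rabs_le_between in Hq. nra.
    - rewrite psum_scal. apply Rmult_le_compat_l; [apply be_nonneg|apply w_mass_le; lra]. }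
  assert (H3 : ln (total t) * total t <= rh * rh).
  { pose proof (total_pos t Ht) as HN. pose proof (total_le_rh t ltac:(lra)).
    pose proof (ln_le_sub_1 _ HN). nra. }
  lra.
Qed.

Lemma entropy_osc_le t s : 0 < t -> 0 < s -> entropy q m (w s) - entropy q m (w t) <= entropy_osc.
Proof.
  intros Ht Hs. pose proof (entropy_le s Hs). pose proof (entropy_ge t Ht). unfold entropy_osc. lra.
Qed.

End Truncation.

Record trunc_estimates (m : nat) (w : R -> nat -> R) : Prop := {
  te_nonneg : forall t k, 0 <= t -> (1 <= k)%nat -> 0 <= w t k;
  te_support : forall t k, 0 <= t -> (m < k)%nat -> w t k = 0;
  te_mass : forall t n, 0 <= t -> psum (fun k => INR k * w t k) n <= rh;
  te_flux_lipschitz : forall l t s, (1 <= l < m)%nat -> 0 < t <= s ->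
    Rabs (Jp q gamma l (w s) - Jp q gamma l (w t)) <= flux_lip l * (s - t);
  te_entropy_osc : forall t s, 0 < t -> 0 < s ->
    entropy q m (w s) - entropy q m (w t) <= entropy_osc;
  te_entropy_antitone : forall t s, 0 < t <= s -> entropy q m (w s) <= entropy q m (w t);
  te_entropy_drop : forall l a b e, (1 <= l < m)%nat -> 0 < a <= b -> 0 <= e ->
    (forall x, a <= x <= b -> e <= Rabs (Jp q gamma l (w x))) ->
    entropy q m (w b) <= entropy q m (w a) - e ^ 2 / (gamma l * Kdiss) * (b - a) }.

Lemma trunc_sol_estimates m w : (2 <= m)%nat -> trunc_sol q gamma y m w -> trunc_estimates m w.
Proof.
  intros Hm Hw. split.
  - intros; eapply w_nonneg; eauto.
  - intros; eapply w_support; eauto.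
  - intros; eapply w_mass_le; eauto.
  - intros; eapply flux_lipschitz; eauto.
  - intros; eapply entropy_osc_le; eauto.
  - intros; eapply entropy_antitone; eauto.
  - intros; eapply entropy_drop; eauto.
Qed.

(** * Passage to the limit *)

Section Limit.

Variables (zm : nat -> R -> nat -> R) (z : R -> nat -> R) (phi : nat -> nat).
Hypothesis hzm : forall m, (2 <= m)%nat -> trunc_sol q gamma y m (zm m).
Hypothesis hz_summable : forall t, 0 <= t -> inX (z t).
Hypothesis hphi : forall j, (phi j < phi (S j))%nat.
Hypothesis hconv : forall t k, 0 <= t -> (1 <= k)%nat -> is_lim_seq (fun j => zm (phi j) t k) (z t k).
Hypothesis hgamma_lim : is_lim_seq (fun l => gamma (S l) / INR (S l)) 0.

Definition W j := zm (phi j).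

Lemma phi_ge j : (j <= phi j)%nat.
Proof. induction j as [|j IH]; [lia|]. specialize (hphi j). lia. Qed.

Lemma W_estimates j : (2 <= j)%nat -> trunc_estimates (phi j) (W j).
Proof. intros Hj. apply trunc_sol_estimates, hzm; pose proof (phi_ge j); lia. Qed.

Lemma z_nonneg t k : 0 <= t -> (1 <= k)%nat -> 0 <= z t k.
Proof.
  intros Ht Hk. apply (is_lim_seq_ge_ev _ _ _ (hconv t k Ht Hk)).
  exists 2%nat. intros j Hj. apply (te_nonneg _ _ (W_estimates j Hj)); auto.
Qed.

Lemma z_mass t n : 0 <= t -> psum (fun k => INR k * z t k) n <= rh.
Proof.
  intros Ht. apply (is_lim_seq_le_ev (fun j => psum (fun k => INR k * W j t k) n)).
  - apply (is_lim_seq_psum (fun j k => INR k * W j t k)). intros k Hk.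
    apply is_lim_seq_mult'; [apply is_lim_seq_const|apply hconv; auto; lia].
  - exists 2%nat. intros j Hj. apply (te_mass _ _ (W_estimates j Hj)); auto.
Qed.

Lemma z_le_rh t k : 0 <= t -> (1 <= k)%nat -> z t k <= rh.
Proof.
  intros Ht Hk. eapply Rle_trans; [|apply (z_mass t k Ht)].
  eapply Rle_trans; [|apply (psum_term_le (fun k => INR k * z t k) k k)]; [| |lia].
  - assert (1 <= INR k) by (apply (le_INR 1); auto). pose proof (z_nonneg t k Ht Hk). nra.
  - intros; apply Rmult_le_pos; [apply pos_INR|apply z_nonneg; auto; lia].
Qed.

Lemma z_ex_series t : 0 <= t -> ex_series (fun k => z t (S k)).
Proof.
  intros Ht.
  apply (@ex_series_le R_AbsRing R_CompleteNormedModule _ (fun k => INR (S k) * Rabs (z t (S k)))).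
  - intros n. assert (1 <= INR (S n)) by (apply (le_INR 1); lia). pose proof (Rabs_pos (z t (S n))).
    change (Rabs (z t (S n)) <= INR (S n) * Rabs (z t (S n))). nra.
  - apply hz_summable; auto.
Qed.

Lemma Nz_z_bounds t : 0 <= t -> 0 <= Nz (z t) <= rh.
Proof.
  intros Ht. assert (Hlim := is_lim_seq_Series_psum (z t) (z_ex_series t Ht)). fold (Nz (z t)) in Hlim.
  split.
  - apply (is_lim_seq_ge_ev _ _ _ Hlim). exists 0%nat. intros n _.
    apply psum_nonneg. intros; apply z_nonneg; auto; lia.
  - apply (is_lim_seq_le_ev _ _ _ Hlim). exists 0%nat. intros n _.
    eapply Rle_trans; [|apply (z_mass t n Ht)]. apply psum_le. intros k Hk.
    assert (1 <= INR k) by (apply (le_INR 1); lia). pose proof (z_nonneg t k Ht ltac:(lia)). nra.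
Qed.

Lemma Nz_W_tail j t L : (2 <= j)%nat -> 0 <= t -> (1 <= L)%nat ->
  0 <= Nz (W j t) - psum (W j t) L <= rh / INR L.
Proof.
  intros Hj Ht HL. destruct (W_estimates j Hj) as [Hnn Hsupp Hmass _ _ _ _].
  apply Nz_sub_psum_le; auto. exists (psum (W j t) (phi j)). apply is_series_support. auto.
Qed.

Lemma Nz_z_tail t L : 0 <= t -> (1 <= L)%nat -> 0 <= Nz (z t) - psum (z t) L <= rh / INR L.
Proof.
  intros Ht HL. apply Nz_sub_psum_le; auto; [intros; apply z_nonneg; auto|intros; apply z_mass; auto|].
  apply z_ex_series; auto.
Qed.

Lemma is_lim_seq_Nz_W t : 0 <= t -> is_lim_seq (fun j => Nz (W j t)) (Nz (z t)).
Proof.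
  intros Ht. apply is_lim_seq_spec. intros eps.
  pose proof rh_pos as Hrh. pose proof (cond_pos eps) as He.
  destruct (archimed_cor1 (eps / (3 * rh)) ltac:(apply Rdiv_lt_0_compat; lra)) as [L [HLeps HL1]].
  assert (Hsmall : rh / INR L < eps / 3).
  { apply (Rmult_lt_compat_l rh) in HLeps; auto. unfold Rdiv at 1.
    replace (eps / 3) with (rh * (eps / (3 * rh))) by (field; lra). exact HLeps. }
  assert (Hpart : is_lim_seq (fun j => psum (W j t) L) (psum (z t) L))
    by (apply is_lim_seq_psum; intros; apply hconv; auto; lia).
  apply is_lim_seq_spec in Hpart. destruct (Hpart (mkposreal (eps / 3) ltac:(lra))) as [N HN].
  exists (Nat.max N 2). intros j Hj. specialize (HN j ltac:(lia)). simpl in HN.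
  pose proof (Nz_W_tail j t L ltac:(lia) Ht HL1). pose proof (Nz_z_tail t L Ht HL1).
  apply Rabs_lt_between in HN. apply Rabs_lt_between. lra.
Qed.

Lemma is_lim_seq_Jp_W t l : 0 <= t -> (1 <= l)%nat ->
  is_lim_seq (fun j => Jp q gamma l (W j t)) (Jp q gamma l (z t)).
Proof.
  intros Ht Hl. unfold Jp. apply is_lim_seq_mult'; [apply is_lim_seq_const|].
  apply (is_lim_seq_minus' (fun j => W j t 1%nat * W j t l)
           (fun j => Nz (W j t) * (q l / q (S l)) * W j t (S l))).
  - apply is_lim_seq_mult'; apply hconv; auto; lia.
  - apply is_lim_seq_mult'; [apply is_lim_seq_mult'|apply hconv; auto; lia].
    + apply is_lim_seq_Nz_W; auto.
    + apply is_lim_seq_const.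
Qed.

Lemma flux_lip_nonneg l : (1 <= l)%nat -> 0 <= flux_lip l.
Proof.
  intros Hl. unfold flux_lip. pose proof (hgamma_pos l Hl). pose proof G_nonneg. pose proof Kdiss_pos.
  pose proof rh_pos. pose proof Rm_pos. assert (0 <= G * Kdiss) by (apply Rmult_le_pos; lra).
  repeat apply Rmult_le_pos; lra.
Qed.

(* If [|J_l (z t)| >= eps], then for late truncations [|J_l| >= eps / 4] on [t, t + step_len],
   by the uniform Lipschitz bound, so their entropy drops by [step_drop]. *)
Definition step_len l eps := eps / (4 * (flux_lip l + 1)).
Definition step_drop l eps := (eps / 4) ^ 2 / (gamma l * Kdiss) * step_len l eps.

Lemma step_len_pos l eps : (1 <= l)%nat -> 0 < eps -> 0 < step_len l eps.
Proof. intros Hl He. pose proof (flux_lip_nonneg l Hl). apply Rdiv_lt_0_compat; lra. Qed.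

Lemma step_drop_pos l eps : (1 <= l)%nat -> 0 < eps -> 0 < step_drop l eps.
Proof.
  intros Hl He. pose proof (hgamma_pos l Hl). pose proof Kdiss_pos.
  apply Rmult_lt_0_compat; [|apply step_len_pos; auto].
  apply Rdiv_lt_0_compat; [apply pow_lt; lra|apply Rmult_lt_0_compat; auto].
Qed.

Lemma flux_lip_step_le l eps : (1 <= l)%nat -> 0 < eps -> flux_lip l * step_len l eps <= eps / 4.
Proof.
  intros Hl He. pose proof (flux_lip_nonneg l Hl). unfold step_len.
  replace (flux_lip l * (eps / (4 * (flux_lip l + 1)))) with (eps / 4 * (flux_lip l / (flux_lip l + 1)))
    by (field; lra).
  assert (flux_lip l / (flux_lip l + 1) <= 1).
  { apply (Rmult_le_reg_r (flux_lip l + 1)); [lra|]. unfold Rdiv. rewrite Rmult_assoc, Rinv_l; lra. }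
  assert (0 <= flux_lip l / (flux_lip l + 1)) by (apply Rdiv_le_0_compat; lra). nra.
Qed.

Lemma entropy_step l eps t : (1 <= l)%nat -> 0 < eps -> 0 < t -> eps <= Rabs (Jp q gamma l (z t)) ->
  exists N, (2 <= N)%nat /\ forall j, (N <= j)%nat ->
    entropy q (phi j) (W j (t + step_len l eps)) <= entropy q (phi j) (W j t) - step_drop l eps.
Proof.
  intros Hl He Ht Hz. assert (Hlim := is_lim_seq_Jp_W t l ltac:(lra) Hl). apply is_lim_seq_spec in Hlim.
  destruct (Hlim (mkposreal (eps / 2) ltac:(lra))) as [N HN].
  exists (Nat.max N (l + 2)). split; [lia|]. intros j Hj. specialize (HN j ltac:(lia)). simpl in HN.
  assert (Hj2 : (2 <= j)%nat) by lia.
  assert (Hlj : (1 <= l < phi j)%nat) by (pose proof (phi_ge j); lia).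
  destruct (W_estimates j Hj2) as [_ _ _ Hlip _ _ Hdrop].
  assert (Hd := step_len_pos l eps Hl He). pose proof (flux_lip_step_le l eps Hl He).
  pose proof (Rabs_triang_inv (Jp q gamma l (z t)) (Jp q gamma l (W j t))) as Hjt.
  rewrite Rabs_minus_sym in HN.
  unfold step_drop. replace (step_len l eps) with (t + step_len l eps - t) at 2 by ring.
  apply Hdrop; auto; [lra|lra|]. intros x Hx.
  pose proof (Hlip l t x Hlj ltac:(lra)) as Hxt.
  assert (flux_lip l * (x - t) <= flux_lip l * step_len l eps)
    by (apply Rmult_le_compat_l; [apply flux_lip_nonneg; lia|lra]).
  pose proof (Rabs_triang_inv (Jp q gamma l (W j t)) (Jp q gamma l (W j x))) as Hjx.
  rewrite Rabs_minus_sym in Hjx. lra.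
Qed.

Lemma entropy_drops_unboundedly l eps : (1 <= l)%nat -> 0 < eps ->
  (forall M, exists t, M < t /\ eps <= Rabs (Jp q gamma l (z t))) ->
  forall K : nat, exists T, 1 <= T /\ exists j0, (2 <= j0)%nat /\ forall j, (j0 <= j)%nat ->
    INR K * step_drop l eps <= entropy q (phi j) (W j 1) - entropy q (phi j) (W j T).
Proof.
  intros Hl He Hbig K. induction K as [|K [T [HT1 [j0 [Hj0 Hdrop]]]]].
  - exists 1. split; [lra|]. exists 2%nat. split; [lia|]. intros. simpl. lra.
  - destruct (Hbig T) as [t [HTt Ht]].
    destruct (entropy_step l eps t Hl He ltac:(lra) Ht) as [N [HN2 HN]].
    exists (t + step_len l eps). pose proof (step_len_pos l eps Hl He). split; [lra|].
    exists (Nat.max j0 N). split; [lia|]. intros j Hj.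
    specialize (Hdrop j ltac:(lia)). specialize (HN j ltac:(lia)).
    assert (entropy q (phi j) (W j t) <= entropy q (phi j) (W j T))
      by (apply (te_entropy_antitone _ _ (W_estimates j ltac:(lia))); lra).
    rewrite S_INR. lra.
Qed.

Lemma flux_z_lim l : (1 <= l)%nat ->
  forall eps, 0 < eps -> exists M, forall t, M < t -> Rabs (Jp q gamma l (z t)) < eps.
Proof.
  intros Hl eps He. apply NNPP. intros Hnot.
  assert (Hbig : forall M, exists t, M < t /\ eps <= Rabs (Jp q gamma l (z t))).
  { intros M. apply NNPP. intros HM. apply Hnot. exists M. intros t Ht.
    apply Rnot_le_lt. intros Hle. apply HM. exists t. auto. }
  assert (Hosc : 0 < entropy_osc)
    by (unfold entropy_osc; pose proof rh_pos; pose proof be_nonneg; nra).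
  pose proof (step_drop_pos l eps Hl He).
  destruct (archimed_cor1 (step_drop l eps / entropy_osc) ltac:(apply Rdiv_lt_0_compat; lra))
    as [K [HK HK0]].
  destruct (entropy_drops_unboundedly l eps Hl He Hbig K) as [T [HT [j0 [Hj0 Hdrop]]]].
  specialize (Hdrop j0 (le_n _)).
  pose proof (te_entropy_osc _ _ (W_estimates j0 Hj0) T 1 ltac:(lra) ltac:(lra)).
  assert (HKR : 0 < INR K) by (apply lt_0_INR; lia).
  assert (entropy_osc < INR K * step_drop l eps).
  { apply (Rmult_lt_compat_l (INR K * entropy_osc)) in HK; [|apply Rmult_lt_0_compat; lra].
    replace (INR K * entropy_osc * / INR K) with entropy_osc in HK by (field; lra).
    replace (INR K * entropy_osc * (step_drop l eps / entropy_osc)) with (INR K * step_drop l eps) in HK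
      by (field; lra). exact HK. }
  lra.
Qed.

Lemma Jp_z_abs_le t k : 0 <= t -> (1 <= k)%nat ->
  Rabs (Jp q gamma k (z t)) <= gamma k * (rh * z t k + rh * Rm * z t (S k)).
Proof.
  intros Ht Hk. apply Jp_abs_le; auto.
  - split; [apply z_nonneg|apply z_le_rh]; auto.
  - apply z_nonneg; auto.
  - apply z_nonneg; auto; lia.
  - apply Nz_z_bounds; auto.
Qed.

Lemma Jp_z_abs_le_moment t k : 0 <= t -> (1 <= k)%nat -> forall e, 0 <= e -> gamma k <= e * INR k ->
  Rabs (Jp q gamma k (z t)) <= e * (rh * (INR k * z t k) + rh * Rm * (INR (S k) * z t (S k))).
Proof.
  intros Ht Hk e He Hge. eapply Rle_trans; [apply Jp_z_abs_le; auto|].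
  pose proof (z_nonneg t k Ht Hk). pose proof (z_nonneg t (S k) Ht ltac:(lia)).
  pose proof rh_pos. pose proof Rm_pos. assert (INR k <= INR (S k)) by (apply le_INR; lia).
  pose proof (pos_INR k).
  assert (0 <= rh * z t k + rh * Rm * z t (S k))
    by (apply Rplus_le_le_0_compat; repeat apply Rmult_le_pos; lra).
  eapply Rle_trans; [apply Rmult_le_compat_r; [|exact Hge]; auto|].
  assert (rh * Rm * z t (S k) * INR k <= rh * Rm * z t (S k) * INR (S k))
    by (apply Rmult_le_compat_l; [repeat apply Rmult_le_pos|]; lra).
  assert (0 <= e * (rh * Rm * z t (S k) * (INR (S k) - INR k)))
    by (apply Rmult_le_pos; [|apply Rmult_le_pos; [repeat apply Rmult_le_pos|]]; lra).
  nra.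
Qed.

Lemma psum_z_moment_shift t n : 0 <= t -> psum (fun k => INR (S k) * z t (S k)) n <= rh.
Proof.
  intros Ht. eapply Rle_trans; [|apply (z_mass t (S n) Ht)].
  rewrite (psum_shift (fun k => INR k * z t k)).
  assert (0 <= INR 1 * z t 1%nat) by (apply Rmult_le_pos; [apply pos_INR|apply z_nonneg; auto]). lra.
Qed.

Lemma Jp_z_ex_series t : 0 <= t -> ex_series (fun k => Jp q gamma (S k) (z t)).
Proof.
  intros Ht. assert (HG := G_nonneg).
  apply (@ex_series_le R_AbsRing R_CompleteNormedModule _
           (fun k => G * (rh * (INR (S k) * Rabs (z t (S k)))
                          + rh * Rm * (INR (S (S k)) * Rabs (z t (S (S k))))))).
  - intros k. change (Rabs (Jp q gamma (S k) (z t)) <= G * (rh * (INR (S k) * Rabs (z t (S k))) +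
      rh * Rm * (INR (S (S k)) * Rabs (z t (S (S k)))))).
    rewrite (Rabs_right (z t (S k))), (Rabs_right (z t (S (S k))))
      by (apply Rle_ge, z_nonneg; auto; lia).
    apply Jp_z_abs_le_moment; auto; lia || (apply hgamma_le; lia).
  - apply (ex_series_scal_l (V := R_NormedModule)), (ex_series_plus (V := R_NormedModule)).
    + apply (ex_series_scal_l (V := R_NormedModule)), hz_summable; auto.
    + apply (ex_series_scal_l (V := R_NormedModule)).
      apply (ex_series_incr_1 (fun k => INR (S k) * Rabs (z t (S k)))), hz_summable; auto.
Qed.

Lemma gamma_le_eventually e : 0 < e -> exists L, forall k, (L < k)%nat -> gamma k <= e * INR k.
Proof.
  intros He. apply is_lim_seq_spec in hgamma_lim. destruct (hgamma_lim (mkposreal e He)) as [L HL].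
  exists (S L). intros k Hk. destruct k as [|k]; [lia|]. specialize (HL k ltac:(lia)). simpl in HL.
  rewrite Rminus_0_r in HL. apply Rabs_lt_between in HL. assert (0 < INR (S k)) by (apply lt_0_INR; lia).
  destruct HL as [_ HL]. apply (Rmult_lt_compat_r (INR (S k))) in HL; auto.
  unfold Rdiv in HL. rewrite Rmult_assoc, Rinv_l in HL by lra. lra.
Qed.

Lemma Jp_z_tail_le e L t : 0 <= e -> 0 <= t -> (forall k, (L < k)%nat -> gamma k <= e * INR k) ->
  Rabs (Series (fun k => Jp q gamma (S k) (z t)) - psum (fun k => Jp q gamma k (z t)) L) <= e * Kdiss.
Proof.
  intros He Ht HL. pose proof rh_pos. pose proof Rm_pos.
  apply (Series_sub_psum_le (fun k => Jp q gamma k (z t))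
           (fun k => e * (rh * (INR k * z t k) + rh * Rm * (INR (S k) * z t (S k))))).
  - apply Jp_z_ex_series; auto.
  - intros k Hk. apply Jp_z_abs_le_moment; auto; lia.
  - intros k Hk. pose proof (z_nonneg t k Ht Hk). pose proof (z_nonneg t (S k) Ht ltac:(lia)).
    pose proof (pos_INR k). pose proof (pos_INR (S k)).
    apply Rmult_le_pos; [lra|]. apply Rplus_le_le_0_compat; repeat apply Rmult_le_pos; lra.
  - intros n. rewrite psum_scal, psum_plus, !psum_scal. unfold Kdiss.
    pose proof (z_mass t n Ht). pose proof (psum_z_moment_shift t n Ht).
    assert (rh * psum (fun k => INR k * z t k) n <= rh * rh) by (apply Rmult_le_compat_l; lra).
    assert (rh * Rm * psum (fun k => INR (S k) * z t (S k)) n <= rh * Rm * rh)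
      by (apply Rmult_le_compat_l; [apply Rmult_le_pos|]; lra).
    apply Rmult_le_compat_l; [lra|]. nra.
Qed.

Lemma psum_Jp_z_lim L : forall eps, 0 < eps ->
  exists M, forall t, M < t -> Rabs (psum (fun k => Jp q gamma k (z t)) L) < eps.
Proof.
  induction L as [|L IH]; intros eps He; [exists 0; intros; simpl; rewrite Rabs_R0; auto|].
  destruct (IH (eps / 2) ltac:(lra)) as [M1 H1].
  destruct (flux_z_lim (S L) ltac:(lia) (eps / 2) ltac:(lra)) as [M2 H2].
  exists (Rmax M1 M2). intros t Ht. simpl psum. eapply Rle_lt_trans; [apply Rabs_triang|].
  specialize (H1 t ltac:(pose proof (Rmax_l M1 M2); lra)).
  specialize (H2 t ltac:(pose proof (Rmax_r M1 M2); lra)). lra.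
Qed.

Lemma J0_z_lim eps : 0 < eps -> exists M, forall t, M < t -> Rabs (J q gamma 0 (z t)) < eps.
Proof.
  intros He. pose proof Kdiss_pos. set (e := eps / (4 * Kdiss)).
  assert (He' : 0 < e) by (apply Rdiv_lt_0_compat; lra).
  destruct (gamma_le_eventually e He') as [L HL].
  destruct (psum_Jp_z_lim L (eps / 2) ltac:(lra)) as [M HM].
  exists (Rmax M 0). intros t Ht. pose proof (Rmax_l M 0). pose proof (Rmax_r M 0).
  specialize (HM t ltac:(lra)). pose proof (Jp_z_tail_le e L t ltac:(lra) ltac:(lra) HL) as Htail.
  replace (e * Kdiss) with (eps / 4) in Htail by (unfold e; field; lra).
  simpl J. rewrite Rabs_Ropp.
  pose proof (Rabs_triang_inv (Series (fun k => Jp q gamma (S k) (z t)))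
                              (psum (fun k => Jp q gamma k (z t)) L)).
  lra.
Qed.

Lemma J_z_lim l : is_lim (fun t => J q gamma l (z t)) p_infty 0.
Proof.
  apply is_lim_spec. intros eps. destruct l as [|l].
  - destruct (J0_z_lim eps (cond_pos eps)) as [M HM]. exists M. intros t Ht. rewrite Rminus_0_r. auto.
  - destruct (flux_z_lim (S l) ltac:(lia) eps (cond_pos eps)) as [M HM].
    exists M. intros t Ht. rewrite Rminus_0_r. apply HM; auto.
Qed.

End Limit.

End Estimates.

Lemma is_lim_seq_bounded_above (u : nat -> R) (L : R) : is_lim_seq u L -> exists B, forall n, u n <= B.
Proof.
  intros H. apply is_lim_seq_Reals in H.
  destruct (cauchy_bound u (CV_Cauchy u (exist _ L H))) as [B HB].
  exists B. intros n. apply HB. exists n. reflexivity.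
Qed.

Lemma is_lim_seq_bounded_below_pos (u : nat -> R) (L : R) : is_lim_seq u L -> 0 < L ->
  (forall n, 0 < u n) -> exists c, 0 < c /\ forall n, c <= u n.
Proof.
  intros H HL Hu. assert (Hinv : is_lim_seq (fun n => / u n) (/ L)).
  { apply (is_lim_seq_inv u L H). intros E. injection E. lra. }
  destruct (is_lim_seq_bounded_above _ _ Hinv) as [B HB].
  assert (HB0 : 0 < B) by (pose proof (HB 0%nat); pose proof (Rinv_0_lt_compat _ (Hu 0%nat)); lra).
  exists (/ B). split; [apply Rinv_0_lt_compat; auto|]. intros n.
  rewrite <- (Rinv_inv (u n)). apply Rinv_le_contravar; [apply Rinv_0_lt_compat, Hu|apply HB].
Qed.

(* [ln q_(k+1) = ln q_k - ln (q_k / q_(k+1))] with [q_1 = 1], and the ratios lie in [c, Rm]. *)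
Lemma ln_q_linear_bound (q : nat -> R) c Rm : q 1%nat = 1 -> (forall l, (1 <= l)%nat -> 0 < q l) ->
  (forall l, (1 <= l)%nat -> c <= q l / q (S l) <= Rm) -> 0 < c ->
  forall l, (1 <= l)%nat -> Rabs (ln (q l)) <= (Rabs (ln c) + Rabs (ln Rm)) * INR l.
Proof.
  intros Hq1 Hq Hr Hc. set (b := Rabs (ln c) + Rabs (ln Rm)).
  assert (Hstep : forall l, (1 <= l)%nat -> Rabs (ln (q l) - ln (q (S l))) <= b).
  { intros l Hl. destruct (Hr l Hl). rewrite <- ln_div by (apply Hq; lia).
    assert (ln c <= ln (q l / q (S l))) by (apply ln_le; lra).
    assert (ln (q l / q (S l)) <= ln Rm) by (apply ln_le; lra).
    apply Rabs_le. unfold b. pose proof (Rle_abs (ln Rm)). pose proof (Rle_abs (- ln c)) as Hn.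
    rewrite Rabs_Ropp in Hn. pose proof (Rabs_pos (ln c)). pose proof (Rabs_pos (ln Rm)). lra. }
  intros l Hl. induction l as [|l IH]; [lia|]. destruct l as [|l].
  - rewrite Hq1, ln_1, Rabs_R0. simpl. unfold b.
    pose proof (Rabs_pos (ln c)). pose proof (Rabs_pos (ln Rm)). lra.
  - specialize (IH ltac:(lia)). specialize (Hstep (S l) ltac:(lia)).
    replace (ln (q (S (S l)))) with (ln (q (S l)) - (ln (q (S l)) - ln (q (S (S l))))) by ring.
    eapply Rle_trans; [apply Rabs_triang|]. rewrite Rabs_Ropp, (S_INR (S l)). lra.
Qed.

Lemma gamma_linear_bound (gamma : nat -> R) :
  is_lim_seq (fun l => gamma (S l) / INR (S l)) 0 ->
  exists G, forall l, (1 <= l)%nat -> gamma l <= G * INR l.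
Proof.
  intros H. destruct (is_lim_seq_bounded_above _ _ H) as [G HG]. exists G. intros l Hl.
  destruct l as [|l]; [lia|]. specialize (HG l). assert (0 < INR (S l)) by (apply lt_0_INR; lia).
  apply (Rmult_le_compat_r (INR (S l))) in HG; [|lra].
  unfold Rdiv in HG. rewrite Rmult_assoc, Rinv_l in HG by lra. lra.
Qed.

Lemma psum_moment_le_rho (y : nat -> R) n : (forall l, (1 <= l)%nat -> 0 <= y l) -> inX y ->
  psum (fun k => INR k * y k) n <= rho y.
Proof.
  intros Hy HyX. apply (psum_le_Series (fun k => INR k * y k));
    [|intros; apply Rmult_le_pos; [apply pos_INR|apply Hy; auto]].
  eapply ex_series_ext; [|apply HyX]. intros k. simpl. rewrite Rabs_right; auto.
  apply Rle_ge, Hy. lia.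
Qed.

Lemma is_lim_seq_of_locally_uniform (u : nat -> R -> R) (v : R -> R) :
  (forall T, 0 <= T -> forall eps, 0 < eps ->
     exists N, forall j, (N <= j)%nat -> forall t, 0 <= t <= T -> Rabs (u j t - v t) < eps) ->
  forall t, 0 <= t -> is_lim_seq (fun j => u j t) (v t).
Proof.
  intros H t Ht. apply is_lim_seq_spec. intros eps.
  destruct (H t Ht eps (cond_pos eps)) as [N HN]. exists N. intros j Hj. apply HN; auto; lra.
Qed.

Theorem lemma15
  (q gamma y : nat -> R) (Rlim : R)
  (hq_pos : forall l, (1 <= l)%nat -> 0 < q l)
  (hq1 : q 1%nat = 1)
  (hR : is_lim_seq (fun l => q (S l) / q (S (S l))) Rlim)
  (hR_pos : 0 < Rlim)
  (hgamma_pos : forall l, (1 <= l)%nat -> 0 < gamma l)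
  (hgamma : is_lim_seq (fun l => gamma (S l) / INR (S l)) 0)
  (hy_nonneg : forall l, (1 <= l)%nat -> 0 <= y l)
  (hyX : inX y)
  (hy1 : 0 < y 1%nat)
  (hrho : 0 < rho y)
  (zm : nat -> R -> nat -> R)
  (hzm : forall m, (2 <= m)%nat -> trunc_sol q gamma y m (zm m))
  (z : R -> nat -> R)
  (hz_cont : cont_into_X z)
  (phi : nat -> nat)
  (hphi : forall j, (phi j < phi (S j))%nat)
  (hconv : forall l, (1 <= l)%nat -> forall T, 0 <= T -> forall eps, 0 < eps ->
     exists N, forall j, (N <= j)%nat -> forall t, 0 <= t <= T ->
       Rabs (zm (phi j) t l - z t l) < eps) :
  forall l, is_lim (fun t => J q gamma l (z t)) p_infty 0.
Proof.
  destruct (gamma_linear_bound gamma hgamma) as [G HG].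
  destruct (is_lim_seq_bounded_above _ _ hR) as [Rm HRm].
  destruct (is_lim_seq_bounded_below_pos _ _ hR hR_pos) as [c [Hc HcR]];
    [intros; apply Rdiv_lt_0_compat; apply hq_pos; lia|].
  assert (Hratio : forall l, (1 <= l)%nat -> c <= q l / q (S l) <= Rm)
    by (intros [|l] Hl; [lia|split; [apply HcR|apply HRm]]).
  intros l. eapply J_z_lim; eauto.
  - intros; apply Hratio; auto.
  - apply ln_q_linear_bound; auto.
  - intros; apply psum_moment_le_rho; auto.
  - apply hz_cont.
  - intros t k Ht Hk.
    apply (is_lim_seq_of_locally_uniform (fun j t => zm (phi j) t k) (fun t => z t k)); auto.
Qed.
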